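(* Let $T,T'$ be tiling classes, $\mathcal N$ an approximating sub-almost-groupoid of $\mathcal M_{II}$, and $\hat\varphi:\mathcal N\to\mathcal M'_{II}$ a map which preserves composability, commutes with the inverse map, and satisfies (1) $\hat\varphi(c)\hat\varphi(c')\preceq\hat\varphi(cc')$ for all composable $c,c'\in\mathcal N$, and (2) there is $t>0$ such that $|\mathrm{rad}(\hat\varphi(u))-t\,\mathrm{rad}(u)|$ is a bounded function on the units. Then $\varphi[\lim u_\nu,c]_{\mathcal N}:=[\lim\hat\varphi(u_\nu),\hat\varphi(c)]$ is well defined and defines a (continuous) groupoid homomorphism $\varphi:\mathcal R_{\mathcal N}\to\mathcal R'$.
   Context: Tilings (finite local complexity): a $d$-dimensional tiling is a countable family of bounded closed subsets of $\mathbb R^d$ (tiles, closures of interiors, finitely many decorations) covering $\mathbb R^d$, overlapping only at boundaries, up to translation; finitely many classes of pairs of touching tiles. $\mathcal M_{II}$ ($\mathcal M'_{II}$ for $T'$): doubly pointed pattern classes $M_{xy}$; $M_{x_1x_2}\preceq N_{y_1y_2}$ if $N$ contains a translate of $M$ with $x_i$ on $y_i$; $c\vdash c'$ if some $L_{z_1z_2}$ and tile $z$ of $L$ satisfy $c\preceq L_{z_1z}$, $c'\preceq L_{zz_2}$, with $cc'$ the minimal such $L_{z_1z_2}$; $(M_{xy})^{-1}=M_{yx}$; units $M_{xx}$; $L(c)=cc^{-1}$, $R(c)=c^{-1}c$; $\mathrm{rad}(u)$ the largest $r$ such that $u$ covers all $r$-balls centred in its pointed tile. A sub-almost-groupoid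 is a subset closed under inverses and products of composable elements. Hull $\Omega$: completion of pointed tilings $T_x$ under $d(\omega,\omega')=e^{-\sup\{r:M_r(\omega)=M_r(\omega')\}}$ ($M_r(\omega)$ the smallest pointed pattern around the pointed tile covering all $r$-balls centred in it). An approximating sequence is a sequence of units $u_\nu$ with $u_1\cdots u_k\vdash u_{k+1}$ for all $k$ and $\mathrm{rad}(u_\nu)\to\infty$; $\lim u_\nu$ is the pointed tiling containing all $u_\nu$ at its pointed tile. $u\preceq\omega$ if $u$ occurs at $\omega$'s pointed tile; $U_u=\{\omega:u\preceq\omega\}$; $\omega\cdot c$ the pointed tiling with pointer moved along $c$ ($L(c)\preceq\omega$). $\Omega_{\mathcal N}=\bigcup_{c\in\mathcal N}U_{R(c)}$; $\mathcal N$ approximating: every $\omega\in\Omega_{\mathcal N}$ is the limit of an approximating sequence in $\mathcal N$. $\mathcal R'$: classes $[\omega,c]$ ($L(c)\preceq\omega$) where $(\omega,c)\sim(\omega,c')$ iff some unit $u\preceq\omega$ has $uc=uc'$, product $[\omega,c][\omega\cdot c,c']=[\omega,cc']$, inverse $[\omega\cdot c,c^{-1}]$, topology generated by $\{[\omega,c]:L(c)\preceq\omega\}$. $\mathcal R_{\mathcal N}$: the classes $[\omega,c]_{\mathcal N}$ with $\omega\in\Omega_{\mathcal N}$, $c\in\mathcal N$, $L(c)\preceq\omega$ under the same equivalence restricted to $c\in\mathcal N$, with the analogous groupoid structure and quotient topology. *)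

From HB Require Import structures.
From mathcomp Require Import all_boot all_order all_algebra.
From mathcomp Require Import all_classical all_reals all_analysis.
Set Implicit Arguments. Unset Strict Implicit. Unset Printing Implicit Defensive.
Import Order.TTheory GRing.Theory Num.Theory.
Import numFieldNormedType.Exports.
Local Open Scope classical_set_scope.
Local Open Scope ring_scope.

Section Tilings.
Variables (R : realType) (d : nat).

Local Notation pt := ('rV[R]_d).

Definition enorm (v : pt) : R := Num.sqrt (\sum_(i < d) (v 0 i) ^+ 2).
Definition eball (x : pt) (r : R) : set pt := [set y | enorm (y - x) < r].

(** A tile: a subset of R^d with a decoration (label). *)
Record tile := Tile { tpts : set pt ; tdec : nat }.

Definition ttr (v : pt) (t : tile) : tile :=
  Tile [set x + v | x in tpts t] (tdec t).

Definition ptr (v : pt) (P : set tile) : set tile := ttr v @` P.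

Definition touching (t t' : tile) := tpts t `&` tpts t' !=set0.

Definition is_tiling (S : set tile) : Prop :=
  [/\ countable S,
      (forall t, S t -> [/\ tpts t !=set0,
                            (exists M : R, forall x, tpts t x -> enorm x <= M),
                            closed (tpts t) &
                            closure (interior (tpts t)) = tpts t]),
      (exists n, forall t, S t -> (tdec t < n)%N),
      (forall x : pt, exists t, S t /\ tpts t x) /\
      (forall t t', S t -> S t' -> t <> t' ->
          interior (tpts t) `&` interior (tpts t') = set0) &
      (* finite local complexity: finitely many translation classes of
         pairs of touching tiles *)
      (exists (n : nat) (f : nat -> tile * tile),
          forall t t', S t -> S t' -> touching t t' ->
            exists i, (i < n)%N /\ (exists v : pt,
              t = ttr v (f i).1 /\ t' = ttr v (f i).2))].

Record dpp := DP { dpP : set tile ; dpx : tile ; dpy : tile }.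

Definition dptr (v : pt) (p : dpp) : dpp :=
  DP (ptr v (dpP p)) (ttr v (dpx p)) (ttr v (dpy p)).

Definition tclass (p : dpp) : set dpp := [set q | exists v, q = dptr v p].

Definition Tpat (T : set tile) (p : dpp) : Prop :=
  [/\ finite_set (dpP p), dpP p (dpx p), dpP p (dpy p) & dpP p `<=` T].

Definition MII (T : set tile) : set (set dpp) :=
  [set c | exists2 p, Tpat T p & c = tclass p].

Definition dle (c c' : set dpp) : Prop :=
  exists p q, [/\ c p, c' q, dpP p `<=` dpP q, dpx p = dpx q & dpy p = dpy q].

Definition dp_inv (c : set dpp) : set dpp := [set q | c (DP (dpP q) (dpy q) (dpx q))].

Definition composable (T : set tile) (c c' : set dpp) : Prop :=
  exists (P : set tile) (z1 z z2 : tile),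
    [/\ Tpat T (DP P z1 z2), P z,
        dle c (tclass (DP P z1 z)) & dle c' (tclass (DP P z z2))].

(** cc' : the minimal L_{z1z2} as above, i.e. the union of the two patterns
    glued along the common tile. *)
Definition dp_mul (c c' : set dpp) : set dpp :=
  [set q | exists p p', [/\ c p, c' p', dpy p = dpx p' &
                           q = DP (dpP p `|` dpP p') (dpx p) (dpy p')]].

Definition Lu (c : set dpp) := dp_mul c (dp_inv c).
Definition Ru (c : set dpp) := dp_mul (dp_inv c) c.

Definition is_unit (T : set tile) (c : set dpp) : Prop :=
  MII T c /\ exists2 p, c p & dpx p = dpy p.

Definition covers (P : set tile) (A : set pt) : Prop :=
  A `<=` \bigcup_(t in P) tpts t.

Definition region (x : tile) (r : R) : set pt :=
  [set y | exists2 p, tpts x p & eball p r y].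

Definition rad (c : set dpp) : R :=
  sup [set r | 0 <= r /\ exists2 p, c p & covers (dpP p) (region (dpx p) r)].

Record ptil := PT { pS : set tile ; ps : tile }.

Definition pteq (w w' : ptil) : Prop :=
  exists v, pS w' = ptr v (pS w) /\ ps w' = ttr v (ps w).

Definition is_Mr (w : ptil) (r : R) (P : set tile) : Prop :=
  [/\ P `<=` pS w, covers P (region (ps w) r) &
      forall P', P' `<=` pS w -> covers P' (region (ps w) r) -> P `<=` P'].

Definition Mr_eq (w w' : ptil) (r : R) : Prop :=
  exists P P', [/\ is_Mr w r P, is_Mr w' r P' &
     exists v, P' = ptr v P /\ ps w' = ttr v (ps w)].

(** The hull Omega of T: pointed tilings all of whose patterns M_r
    agree with some M_r(T_x) (elements of the completion). *)
Definition hull (T : set tile) : set ptil :=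
  [set w | [/\ is_tiling (pS w), pS w (ps w) &
            forall r : R, exists x, T x /\ Mr_eq w (PT T x) r]].

(** {w' : d(w,w') < e^{-Rr}} *)
Definition hball (w : ptil) (Rr : R) : set ptil :=
  [set w' | exists2 r, Rr < r & Mr_eq w w' r].

Definition occurs_at (c : set dpp) (w : ptil) : Prop :=
  exists2 p, c p & dpP p `<=` pS w /\ dpx p = ps w.

Definition Uu (T : set tile) (u : set dpp) : set ptil :=
  [set w | hull T w /\ occurs_at u w].

Definition moved (w : ptil) (c : set dpp) (w' : ptil) : Prop :=
  exists2 p, c p & [/\ dpP p `<=` pS w, dpx p = ps w & w' = PT (pS w) (dpy p)].

Fixpoint uprod (u : nat -> set dpp) (k : nat) : set dpp :=
  match k with 0 => u 0%N | k.+1 => dp_mul (uprod u k) (u k.+1) end.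

Definition approx_seq (T : set tile) (u : nat -> set dpp) : Prop :=
  [/\ forall n, is_unit T (u n),
      forall k, composable T (uprod u k) (u k.+1) &
      forall M : R, exists n0, forall n, (n0 <= n)%N -> M <= rad (u n)].

Definition is_lim (u : nat -> set dpp) (w : ptil) : Prop :=
  [/\ is_tiling (pS w), pS w (ps w) & forall n, occurs_at (u n) w].

Definition sub_almost_groupoid (T : set tile) (N : set (set dpp)) : Prop :=
  [/\ N `<=` MII T,
      forall c, N c -> N (dp_inv c) &
      forall c c', N c -> N c' -> composable T c c' -> N (dp_mul c c')].

Definition OmegaN (T : set tile) (N : set (set dpp)) : set ptil :=
  [set w | exists2 c, N c & Uu T (Ru c) w].

Definition approximating (T : set tile) (N : set (set dpp)) : Prop :=
  forall w, OmegaN T N w ->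
    exists u, [/\ approx_seq T u, forall n, N (u n) & is_lim u w].

Definition gcl (T : set tile) (w : ptil) (c : set dpp) : set (ptil * set dpp) :=
  [set q | [/\ pteq w q.1, MII T q.2, occurs_at (Lu q.2) q.1 &
     exists u, [/\ is_unit T u, occurs_at u w & dp_mul u c = dp_mul u q.2]]].

Definition Rgpd (T : set tile) : set (set (ptil * set dpp)) :=
  [set g | exists w c, [/\ hull T w, MII T c, occurs_at (Lu c) w & g = gcl T w c]].

Definition gmul (T : set tile) (g h k : set (ptil * set dpp)) : Prop :=
  exists w c c' w1, [/\ [/\ hull T w, MII T c, MII T c' & occurs_at (Lu c) w],
     moved w c w1, occurs_at (Lu c') w1, composable T c c' &
     [/\ g = gcl T w c, h = gcl T w1 c' & k = gcl T w (dp_mul c c')]].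

Definition Ogen (T : set tile) (c : set dpp) : set (set (ptil * set dpp)) :=
  [set g | exists w, [/\ hull T w, occurs_at (Lu c) w & g = gcl T w c]].

Definition gopen (T : set tile) (V : set (set (ptil * set dpp))) : Prop :=
  V `<=` Rgpd T /\
  forall g, V g -> exists (n : nat) (f : nat -> set dpp),
    [/\ forall i, (i < n)%N -> MII T (f i),
        forall i, (i < n)%N -> Ogen T (f i) g &
        forall g', Rgpd T g' -> (forall i, (i < n)%N -> Ogen T (f i) g') -> V g'].

Definition XN (T : set tile) (N : set (set dpp)) : set (ptil * set dpp) :=
  [set q | [/\ OmegaN T N q.1, N q.2 & occurs_at (Lu q.2) q.1]].

Definition gclN (T : set tile) (N : set (set dpp)) (w : ptil) (c : set dpp)
  : set (ptil * set dpp) :=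
  [set q | [/\ pteq w q.1, XN T N q &
     exists u, [/\ is_unit T u, occurs_at u w & dp_mul u c = dp_mul u q.2]]].

Definition RN (T : set tile) (N : set (set dpp)) : set (set (ptil * set dpp)) :=
  [set g | exists w c, XN T N (w, c) /\ g = gclN T N w c].

Definition gmulN (T : set tile) (N : set (set dpp)) (g h k : set (ptil * set dpp)) :=
  exists w c c' w1, [/\ XN T N (w, c) /\ N c', moved w c w1, XN T N (w1, c'),
     composable T c c' &
     [/\ g = gclN T N w c, h = gclN T N w1 c' & k = gclN T N w (dp_mul c c')]].

(** Open subsets of X_N = {(w,c)} (topology of Omega x N with N discrete);
    R_N carries the quotient topology. *)
Definition XNopen (T : set tile) (N : set (set dpp)) (W : set (ptil * set dpp)) :=
  W `<=` XN T N /\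
  forall w c, W (w, c) -> exists Rr : R,
    forall w', XN T N (w', c) -> hball w Rr w' -> W (w', c).

End Tilings.

(* The approximating sequences of [N] are nested sequences of units whose
   radii tend to infinity.  Their images under [phih] are again nested
   sequences of units (for units [a ⪯ b] one has [b a = b], so (1) puts
   [phih a] inside [phih b]) with radii tending to infinity by (2); gluing the
   images along a common pointer tile gives a pointed tiling of the hull of
   [T'], the limit [lim phih (u n)].
   Every relation [v c = v c'] between representatives is eventually absorbed
   by the units [u m] of an approximating sequence, and (1) transports
   [u m c = u m c'] to [phih (u M) phih c = phih (u M) phih c'] for a large
   image unit [phih (u M)]; hence [phi] is well defined.  The same absorption
   turns the inclusion (1) into the equality [[w', phih c phih c'] =
   [w', phih (c c')]], the homomorphism property.  Continuity holds because
   the finitely many classes cutting out a basic open set are witnessed below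
   a single [phih (u M)], and [u M] occurs at every pointed tiling close to
   [w]. *)

From Pilot Require Import Defs.
From HB Require Import structures.
From mathcomp Require Import all_boot all_order all_algebra.
From mathcomp Require Import all_classical all_reals all_analysis.
From mathcomp Require Import lra.
Set Implicit Arguments. Unset Strict Implicit. Unset Printing Implicit Defensive.
Import Order.TTheory GRing.Theory Num.Theory.
Import numFieldNormedType.Exports.
Import Defs.
Local Open Scope classical_set_scope.
Local Open Scope ring_scope.

Section Translations.
Variables (R : realType) (d : nat).
Local Notation pt := ('rV[R]_d).
Local Notation tile := (tile R d).
Local Notation dpp := (dpp R d).
Local Notation shift v A := [set x + v | x in A].
Implicit Types (t : tile) (P Q : set tile) (p : dpp) (v a b : pt) (A : set pt).

Lemma tile_ext t t' : tpts t = tpts t' -> tdec t = tdec t' -> t = t'.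
Proof. by case: t => ? ?; case: t' => ? ? /= -> ->. Qed.

Lemma shiftE A v : shift v A = [set y | A (y - v)].
Proof.
apply/seteqP; split => y; first by case=> x Ax <- /=; rewrite addrK.
by move=> Ayv; exists (y - v) => //; rewrite subrK.
Qed.

Lemma shift0 A : shift 0 A = A.
Proof. by rewrite shiftE; apply/seteqP; split => y; rewrite /= subr0. Qed.

Lemma shiftD A a b : shift a (shift b A) = shift (b + a) A.
Proof. by rewrite !shiftE; apply/funext => y; rewrite /= opprD addrA addrAC. Qed.

Lemma ttr0 t : ttr 0 t = t.
Proof. by apply: tile_ext => //=; rewrite shift0. Qed.

Lemma ttrD a b t : ttr a (ttr b t) = ttr (b + a) t.
Proof. by apply: tile_ext => //=; rewrite shiftD. Qed.

Lemma ttrK v t : ttr (- v) (ttr v t) = t.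
Proof. by rewrite ttrD subrr ttr0. Qed.

Lemma ttrKV v t : ttr v (ttr (- v) t) = t.
Proof. by rewrite ttrD addNr ttr0. Qed.

Lemma ttr_inj v : injective (ttr v).
Proof. by move=> t t' e; rewrite -(ttrK v t) e ttrK. Qed.

Lemma ptr0 P : ptr 0 P = P.
Proof.
apply/seteqP; split => x; first by case=> y Py <-; rewrite ttr0.
by move=> Px; exists x => //; rewrite ttr0.
Qed.

Lemma ptrD a b P : ptr a (ptr b P) = ptr (b + a) P.
Proof.
apply/seteqP; split => x.
  by case=> y [z Pz <-] <-; exists z => //; rewrite ttrD.
by case=> z Pz <-; exists (ttr b z); [exists z|rewrite ttrD].
Qed.

Lemma ptrK v P : ptr (- v) (ptr v P) = P.
Proof. by rewrite ptrD subrr ptr0. Qed.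

Lemma ptr_ttr v P t : ptr v P (ttr v t) <-> P t.
Proof.
split; last by move=> Pt; exists t.
by case=> t' Pt' /ttr_inj <-.
Qed.

Lemma ptrP v P t : ptr v P t <-> P (ttr (- v) t).
Proof. by rewrite -{1}(ttrKV v t) ptr_ttr. Qed.

Lemma ptrS v P Q : P `<=` Q -> ptr v P `<=` ptr v Q.
Proof. by move=> PQ t [t' /PQ Qt' <-]; exists t'. Qed.

Lemma ptrU v P Q : ptr v (P `|` Q) = ptr v P `|` ptr v Q.
Proof. exact: image_setU. Qed.

Lemma dptrD a b p : dptr a (dptr b p) = dptr (b + a) p.
Proof. by rewrite /dptr /= ptrD !ttrD. Qed.

Lemma dptr0 p : dptr 0 p = p.
Proof. by case: p => P x y; rewrite /dptr /= ptr0 !ttr0. Qed.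

Lemma double_eq0 v : v + v = 0 -> v = 0.
Proof. by move=> /eqP; rewrite -mulr2n -scaler_nat scaler_eq0 pnatr_eq0 => /eqP. Qed.

Lemma enorm_ge0 v : 0 <= enorm v.
Proof. exact: sqrtr_ge0. Qed.

Lemma sum_sqr_ge0 v : 0 <= \sum_(i < d) (v 0 i) ^+ 2.
Proof. by apply: sumr_ge0 => i _; exact: sqr_ge0. Qed.

Lemma coord_le_enorm v i : `|v 0 i| <= enorm v.
Proof.
rewrite /enorm -sqrtr_sqr; apply: ler_wsqrtr.
by rewrite (bigD1 i) //= lerDl; apply: sumr_ge0 => j _; exact: sqr_ge0.
Qed.

Lemma enormD_le2 a b : enorm (a + b) <= 2 * (enorm a + enorm b).
Proof.
have ha := enorm_ge0 a; have hb := enorm_ge0 b.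
rewrite -[2 * _]ger0_norm ?mulr_ge0 ?addr_ge0 //.
rewrite /enorm -sqrtr_sqr; apply: ler_wsqrtr.
apply: (@le_trans _ _ (\sum_(i < d) (2 * ((a 0 i) ^+ 2 + (b 0 i) ^+ 2)))).
  by apply: ler_sum => i _; rewrite mxE; have := sqr_ge0 (a 0 i - b 0 i); lra.
rewrite -mulr_sumr big_split /=.
have sa := sum_sqr_ge0 a; have sb := sum_sqr_ge0 b.
move: ha hb (sqr_sqrtr sa) (sqr_sqrtr sb); rewrite /enorm.
set na := Num.sqrt _; set nb := Num.sqrt _ => ha hb <- <-; nra.
Qed.

Definition nonempty_bounded A := A !=set0 /\ exists M, forall x, A x -> enorm x <= M.

(* The orbit [x0 + n a] of a point of a bounded set invariant under [shift a]
   stays bounded, which forces every coordinate of [a] to vanish. *)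
Lemma bounded_shift_fixed A a : nonempty_bounded A -> shift a A = A -> a = 0.
Proof.
move=> [[x0 Ax0] [M hM]] e.
have orbit n : A (x0 + a *+ n).
  elim: n => [|n ih]; first by rewrite mulr0n addr0.
  by rewrite -e; exists (x0 + a *+ n) => //; rewrite mulrSr addrA.
apply/rowP => i; rewrite mxE; apply/eqP/negPn/negP => ai0.
have bound n : `|a 0 i| *+ n <= M + `|x0 0 i|.
  have := le_trans (coord_le_enorm (x0 + a *+ n) i) (hM _ (orbit n)).
  rewrite !mxE mulmxnE => h1.
  have := ler_normD (x0 0 i + a 0 i *+ n) (- x0 0 i).
  by rewrite addrC addKr normrMn normrN => h2; lra.
have apos : 0 < `|a 0 i| by rewrite normr_gt0.
have C0 : 0 <= (M + `|x0 0 i|) / `|a 0 i|.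
  by apply: divr_ge0 => //; have := bound 0%N; rewrite mulr0n; lra.
have := archi_boundP C0; set k := Num.bound _ => hk.
have := bound k; rewrite -mulr_natr -ler_pdivlMl // mulrC => hk2.
by move: (lt_le_trans hk hk2); rewrite ltxx.
Qed.

Lemma bounded_shift_inj A a b : nonempty_bounded A -> shift a A = shift b A -> a = b.
Proof.
move=> bA e; apply/eqP; rewrite -subr_eq0; apply/eqP; apply: (bounded_shift_fixed bA).
by rewrite -shiftD e shiftD subrr shift0.
Qed.

Lemma ttr_injv t a b : nonempty_bounded (tpts t) -> ttr a t = ttr b t -> a = b.
Proof. by move=> bt /(congr1 (@tpts _ _)) /=; exact: bounded_shift_inj. Qed.

Lemma bounded_shift A v : nonempty_bounded A -> nonempty_bounded (shift v A).
Proof.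
move=> [[x Ax] [M hM]]; split; first by exists (x + v), x.
exists (2 * (M + enorm v)) => _ [y Ay <-].
by apply: le_trans (enormD_le2 _ _) _; rewrite ler_pM2l // lerD2r hM.
Qed.

Lemma nbhs_shift A v x : nbhs (x + v) (shift v A) <-> nbhs x A.
Proof.
rewrite shiftE; have h := nbhsDl [set y | A (y - v)] x v.
split => H.
  by move: (h.1 H); apply: filterS => y /=; rewrite addrK.
by apply: h.2; move: H; apply: filterS => y /=; rewrite addrK.
Qed.

Lemma interior_shift A v : (shift v A)° = shift v A°.
Proof.
apply/seteqP; split => z.
  move=> hz; exists (z - v); last by rewrite subrK.
  by rewrite /interior /= -(nbhs_shift A v) subrK.
by case=> x Ax <-; rewrite /interior /= nbhs_shift.
Qed.

Lemma setC_shift A v : ~` shift v A = shift v (~` A).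
Proof. by rewrite !shiftE. Qed.

Lemma closure_shift A v : closure (shift v A) = shift v (closure A).
Proof.
have closureE (B : set pt) : closure B = ~` (~` B)° by rewrite interiorC setCK.
by rewrite (closureE (shift v A)) (setC_shift A) interior_shift setC_shift -closureE.
Qed.

Lemma closed_shift A v : closed A -> closed (shift v A).
Proof. by rewrite !closure_id closure_shift => <-. Qed.

Lemma interior_ttr t v : (tpts (ttr v t))° = shift v (tpts t)°.
Proof. exact: interior_shift. Qed.

Lemma continuous_sum (T : topologicalType) (I : Type) (s : seq I) (f : I -> T -> R) x :
  (forall i, {for x, continuous (f i)}) ->
  {for x, continuous (fun y => \sum_(i <- s) f i y)}.
Proof.
move=> hf; elim: s => [|i s ih].
  have -> : (fun y => \sum_(j <- [::]) f j y) = (fun=> 0).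
    by apply/funext => y; rewrite big_nil.
  exact: cst_continuous.
have -> : (fun y => \sum_(j <- i :: s) f j y) = f i + (fun y => \sum_(j <- s) f j y).
  by apply/funext => y; rewrite big_cons.
exact: continuousD.
Qed.

Lemma continuous_enorm_sub (p : pt) : continuous (fun y : pt => enorm (y - p)).
Proof.
move=> x; rewrite /enorm.
apply: (continuous_comp (f := fun y : pt => \sum_(i < d) (y - p) 0 i ^+ 2));
  last exact: sqrt_continuous.
apply: continuous_sum => i.
have hc : {for x, continuous (fun y : pt => (y - p) 0 i)}.
  have -> : (fun y : pt => (y - p) 0 i) = (fun y : pt => y 0 i) - (fun=> p 0 i).
    by apply/funext => y; rewrite !mxE.
  by apply: continuousB; [exact: coord_continuous|exact: cst_continuous].
have -> : (fun y : pt => (y - p) 0 i ^+ 2) =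
    (fun y : pt => (y - p) 0 i) \* (fun y : pt => (y - p) 0 i).
  by apply/funext => y; rewrite expr2.
exact: continuousM.
Qed.

Lemma open_eball (p : pt) r : open (eball p r).
Proof.
have -> : eball p r = (fun y : pt => enorm (y - p)) @^-1` [set z | z < r] by [].
apply: open_comp; last exact: open_lt.
by move=> y _; exact: continuous_enorm_sub.
Qed.

Lemma region_bigcup (x : tile) r : region x r = \bigcup_(p in tpts x) eball p r.
Proof. by apply/seteqP; split => y [p hp hy]; exists p. Qed.

Lemma open_region (x : tile) r : open (region x r).
Proof. by rewrite region_bigcup; apply: bigcup_open => p _; exact: open_eball. Qed.

Lemma eball_shift (p : pt) v r : eball (p + v) r = shift v (eball p r).
Proof.
by rewrite shiftE; apply/seteqP; split => y; rewrite /eball /= opprD addrA addrAC.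
Qed.

Lemma region_ttr (x : tile) v r : region (ttr v x) r = shift v (region x r).
Proof.
apply/seteqP; split => y.
  case=> _ [p xp <-]; rewrite eball_shift => -[z hz <-].
  by exists z => //; exists p.
case=> z [p xp hz] <-; exists (p + v); first by exists p.
by rewrite eball_shift; exists z.
Qed.

Lemma regionS (x : tile) (r r' : R) : r <= r' -> region x r `<=` region x r'.
Proof. by move=> rr y [p xp hy]; exists p => //; exact: lt_le_trans hy rr. Qed.

Lemma region_reach (x : tile) (p z : pt) : tpts x p -> region x (enorm (z - p) + 1) z.
Proof. by move=> xp; exists p => //; rewrite /eball /= ltrDl. Qed.

Lemma covers_ptr P A v : covers P A -> covers (ptr v P) (shift v A).
Proof.
move=> cPA _ [y Ay <-]; case: (cPA y Ay) => t Pt ty.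
by exists (ttr v t); [exists t|exists y].
Qed.

Lemma coversS P Q (A B : set pt) : P `<=` Q -> B `<=` A -> covers P A -> covers Q B.
Proof. by move=> PQ BA cPA y /BA /cPA [t Pt ty]; exists t => //; apply: PQ. Qed.

End Translations.

Section TilingFacts.
Variables (R : realType) (d : nat) (S : set (tile R d)).
Hypothesis tS : is_tiling S.
Implicit Types (t s : tile R d) (P : set (tile R d)).

Lemma tiling_tile t : S t -> [/\ tpts t !=set0,
    (exists M : R, forall x, tpts t x -> enorm x <= M),
    closed (tpts t) & closure (tpts t)° = tpts t].
Proof. by case: tS => _ h _ _ _; exact: h. Qed.

Lemma tiling_bounded t : S t -> nonempty_bounded (tpts t).
Proof. by move=> /tiling_tile []. Qed.

Lemma tiling_cover y : exists t, S t /\ tpts t y.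
Proof. by case: tS => _ _ _ []. Qed.

Lemma tiling_interiorI t t' : S t -> S t' -> t <> t' -> (tpts t)° `&` (tpts t')° = set0.
Proof. by case: tS => _ _ _ [_ h] _; exact: h. Qed.

Lemma tiling_interior_neq0 t : S t -> exists z, (tpts t)° z.
Proof.
move=> /tiling_tile [[y ty] _ _ e].
have : closure (tpts t)° y by rewrite e.
by move=> /(_ setT); rewrite setIT; apply; exact: filterT.
Qed.

(* A point of a tile's interior lies in no other tile, since tiles are the
   closures of their interiors. *)
Lemma tiling_interior_unique t s z : S t -> S s -> (tpts t)° z -> tpts s z -> s = t.
Proof.
move=> St Ss zt zs; apply: contrapT => st.
have /tiling_tile [_ _ _ e] := Ss.
have hn : nbhs z (tpts t)° by move: (open_interior (tpts t)); rewrite openE; apply.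
move: zs; rewrite -e => /(_ _ hn).
by rewrite (tiling_interiorI Ss St st) => -[? []].
Qed.

Lemma covers_interior_tile P A t z : P `<=` S -> covers P A -> S t ->
  (tpts t)° z -> A z -> P t.
Proof.
move=> PS cPA St zt /cPA [s Ps zs].
by rewrite -(tiling_interior_unique St (PS _ Ps) zt zs).
Qed.

End TilingFacts.

Section PatternClasses.
Variables (R : realType) (d : nat).
Local Notation pt := ('rV[R]_d).
Local Notation tile := (tile R d).
Local Notation dpp := (dpp R d).
Local Notation ptil := (ptil R d).
Implicit Types (P Q : set tile) (p q : dpp) (v : pt) (A B C D E U V : set dpp)
  (w : ptil).

Definition tr_closed A := forall p v, A p -> A (dptr v p).
Definition tr_connected A := forall p q, A p -> A q -> exists v, q = dptr v p.
Definition xunique A := forall p q, A p -> A q -> dpx p = dpx q -> p = q.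
Definition yunique A := forall p q, A p -> A q -> dpy p = dpy q -> p = q.
Definition unitary A := forall p, A p -> dpx p = dpy p.

(* The bounded pointer tiles make a pattern of the class determined by its
   position, see [pclass_xunique]. *)
Definition pclass A := exists p0, A = tclass p0 /\
  [/\ nonempty_bounded (tpts (dpx p0)), nonempty_bounded (tpts (dpy p0)),
      dpP p0 (dpx p0) & dpP p0 (dpy p0)].

Lemma dpp_eta p : DP (dpP p) (dpx p) (dpy p) = p.
Proof. by case: p. Qed.

Lemma tclass_refl p : tclass p p.
Proof. by exists 0; rewrite dptr0. Qed.

Lemma tclass_tr_closed p0 : tr_closed (tclass p0).
Proof. by move=> p v [w ->]; exists (w + v); rewrite dptrD. Qed.

Lemma tclass_tr_connected p0 : tr_connected (tclass p0).
Proof. by move=> p q [a ->] [b ->]; exists (b - a); rewrite dptrD addrCA subrr addr0. Qed.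

Lemma tclass_unitary p0 : dpx p0 = dpy p0 -> unitary (tclass p0).
Proof. by move=> e _ [v ->] /=; rewrite e. Qed.

Lemma pclass_tr_closed A : pclass A -> tr_closed A.
Proof. by move=> [p0 [-> _]]; exact: tclass_tr_closed. Qed.

Lemma pclass_tr_connected A : pclass A -> tr_connected A.
Proof. by move=> [p0 [-> _]]; exact: tclass_tr_connected. Qed.

Lemma pclass_xunique A : pclass A -> xunique A.
Proof. by move=> [p0 [-> [bx _ _ _]]] p q [a ->] [b ->] /= /(ttr_injv bx) ->. Qed.

Lemma pclass_yunique A : pclass A -> yunique A.
Proof. by move=> [p0 [-> [_ by_ _ _]]] p q [a ->] [b ->] /= /(ttr_injv by_) ->. Qed.

Lemma pclass_pointers A p : pclass A -> A p -> dpP p (dpx p) /\ dpP p (dpy p).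
Proof. by move=> [p0 [-> [_ _ h1 h2]]] [a ->] /=; split; exact/ptr_ttr. Qed.

Lemma pclass_neq0 A : pclass A -> exists p, A p.
Proof. by move=> [p0 [-> _]]; exists p0; exact: tclass_refl. Qed.

Definition dpp_swap p := DP (dpP p) (dpy p) (dpx p).

Lemma dp_invP A q : dp_inv A q <-> A (dpp_swap q).
Proof. by []. Qed.

Lemma dp_inv_swap A p : A p -> dp_inv A (dpp_swap p).
Proof. by rewrite dp_invP /dpp_swap /= dpp_eta. Qed.

Lemma dp_invK A : dp_inv (dp_inv A) = A.
Proof. by apply/seteqP; split => q; rewrite /dp_inv /= dpp_eta. Qed.

Lemma unitary_inv A : unitary A -> dp_inv A = A.
Proof.
move=> hA; apply/seteqP; split => -[P x y] h; rewrite dp_invP in h *;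
  by have := hA _ h; rewrite /dpp_swap /= => e; subst.
Qed.

Lemma tr_closed_inv A : tr_closed A -> tr_closed (dp_inv A).
Proof. by move=> h p v; rewrite !dp_invP => /(h _ v). Qed.

Lemma tr_closed_mul A B : tr_closed A -> tr_closed B -> tr_closed (dp_mul A B).
Proof.
move=> hA hB _ v [p [p' [Ap Bp' e ->]]].
exists (dptr v p), (dptr v p'); split; [exact: hA|exact: hB|by rewrite /= e|].
by rewrite /dptr /= ptrU.
Qed.

Lemma xunique_mul A B : xunique A -> xunique B -> xunique (dp_mul A B).
Proof.
move=> hA hB _ _ [p [p' [Ap Bp' e ->]]] [q [q' [Aq Bq' e' ->]]] /= exq.
have epq := hA _ _ Ap Aq exq; subst q.
by have := hB _ _ Bp' Bq'; rewrite -e -e' => /(_ erefl) ->.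
Qed.

Lemma dp_mulA A B C : dp_mul (dp_mul A B) C = dp_mul A (dp_mul B C).
Proof.
apply/seteqP; split => q.
  move=> [_ [r [[p [p' [Ap Bp' e ->]]] Cr e2 ->]]] /=.
  exists p, (DP (dpP p' `|` dpP r) (dpx p') (dpy r)); split => //.
    by exists p', r; split.
  by rewrite /= setUA.
move=> [p [_ [Ap [p' [r [Bp' Cr e2 ->]]] e ->]]] /=.
exists (DP (dpP p `|` dpP p') (dpx p) (dpy p')), r; split => //.
  by exists p, p'; split.
by rewrite /= setUA.
Qed.

Lemma dle_below A B q : dle A B -> tr_closed A -> tr_connected B -> B q ->
  exists p, [/\ A p, dpP p `<=` dpP q, dpx p = dpx q & dpy p = dpy q].
Proof.
move=> [p [q' [Ap Bq' sub ex ey]]] hA hB Bq.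
have [v ->] := hB _ _ Bq' Bq.
exists (dptr v p); split; [exact: hA|exact: ptrS|by rewrite /= ex|by rewrite /= ey].
Qed.

Definition placed A w p := [/\ A p, dpP p `<=` pS w & dpx p = ps w].

Lemma occursP A w : occurs_at A w <-> exists p, placed A w p.
Proof.
split; first by move=> [p Ap [h1 h2]]; exists p.
by move=> [p [Ap h1 h2]]; exists p.
Qed.

Lemma occurs_dle A B w : dle A B -> tr_closed A -> tr_connected B ->
  occurs_at B w -> occurs_at A w.
Proof.
move=> hAB hA hB /occursP [q [Bq h1 h2]].
have [p [Ap s ex _]] := dle_below hAB hA hB Bq.
by exists p => //; split; [exact: subset_trans s h1|rewrite ex].
Qed.

Lemma occurs_Lu A w : occurs_at (Lu A) w <-> exists p, placed A w p.
Proof.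
split.
  move=> [_ [p [p' [Ap _ _ ->]]] [/= h1 h2]].
  by exists p; split => //; apply: subset_trans h1; exact: subsetUl.
move=> [p [Ap h1 h2]]; exists (DP (dpP p `|` dpP p) (dpx p) (dpx p)).
  by exists p, (dpp_swap p); split => //; exact: dp_inv_swap.
by split => //=; rewrite setUid.
Qed.

Lemma LuP A q : yunique A ->
  Lu A q <-> exists2 p, A p & q = DP (dpP p) (dpx p) (dpx p).
Proof.
move=> hA; split.
  move=> [p [p' [Ap Ap' e ->]]]; rewrite dp_invP in Ap'.
  have := hA _ _ Ap Ap'; rewrite /dpp_swap /= e => /(_ erefl) ep.
  by exists p => //; rewrite ep /= setUid.
move=> [p Ap ->]; exists p, (dpp_swap p); split => //=; last by rewrite setUid.
exact: dp_inv_swap.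
Qed.

Lemma Lu_unitary A : pclass A -> unitary (Lu A).
Proof. by move=> gA q /(LuP _ (pclass_yunique gA)) [p _ ->]. Qed.

Lemma Lu_tr_closed A : pclass A -> tr_closed (Lu A).
Proof.
by move=> /pclass_tr_closed cA; exact: tr_closed_mul cA (tr_closed_inv cA).
Qed.

Lemma placed_mul A B w p p' : placed A w p -> B p' -> dpx p' = dpy p ->
  dpP p' `<=` pS w -> placed (dp_mul A B) w (DP (dpP p `|` dpP p') (dpx p) (dpy p')).
Proof.
move=> [Ap pw px] Bp' e p'w; split => //=; first by exists p, p'; split.
by move=> t [/pw|/p'w].
Qed.

Lemma dp_mul_absorb U A : unitary U -> pclass U -> unitary A -> pclass A -> dle A U ->
  dp_mul U A = U.
Proof.
move=> uU /pclass_tr_connected rU uA gA hAU.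
have cA := pclass_tr_closed gA; have qA := pclass_xunique gA.
apply/seteqP; split => q.
  move=> [p [p' [Up Ap' e ->]]].
  have [r [Ar s ex _]] := dle_below hAU cA rU Up.
  have := qA _ _ Ar Ap'; rewrite ex (uU _ Up) e => /(_ erefl) er; subst r.
  by rewrite ((setUidPl _ _).2 s) -(uA _ Ap') -e -{1}(uU _ Up) dpp_eta.
move=> Uq; have [r [Ar s ex ey]] := dle_below hAU cA rU Uq.
exists q, r; split => //; first by rewrite ex uU.
by rewrite ((setUidPl _ _).2 s) -(uA _ Ar) ex {2}(uU _ Uq) dpp_eta.
Qed.

Lemma unit_mul_dle V D E pv pd : unitary V -> pclass V -> pclass D ->
  tr_closed E -> xunique E -> dle E D -> V pv -> D pd -> dpx pv = dpx pd ->
  dpP pd `<=` dpP pv -> dp_mul V E = dp_mul V D.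
Proof.
move=> uV /pclass_tr_connected rV gD cE qE hED Vpv Dpd exx sub.
have cD := pclass_tr_closed gD; have rD := pclass_tr_connected gD.
have qD := pclass_xunique gD.
have cover p1 : V p1 -> exists p2, [/\ D p2, dpx p2 = dpx p1 & dpP p2 `<=` dpP p1].
  move=> Vp1; have [s ->] := rV _ _ Vpv Vp1.
  by exists (dptr s pd); split; [exact: cD|rewrite /= exx|exact: ptrS].
apply/seteqP; split => q.
  move=> [p [p' [Vp Ep' e ->]]].
  have [p2 [Dp2 ex2 s2]] := cover _ Vp.
  have [p3 [Ep3 s3 ex3 ey3]] := dle_below hED cE rD Dp2.
  have := qE _ _ Ep3 Ep'; rewrite ex3 ex2 (uV _ Vp) e => /(_ erefl) e3; subst p3.
  exists p, p2; split => //; first by rewrite ex2 uV.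
  rewrite ey3 ex3 ex2 ((setUidPl _ _).2 s2).
  by rewrite ((setUidPl _ _).2 (subset_trans s3 s2)).
move=> [p [p' [Vp Dp' e ->]]].
have [p2 [Dp2 ex2 s2]] := cover _ Vp.
have := qD _ _ Dp2 Dp'; rewrite ex2 (uV _ Vp) e => /(_ erefl) e2; subst p2.
have [p3 [Ep3 s3 ex3 ey3]] := dle_below hED cE rD Dp'.
exists p, p3; split => //; first by rewrite ex3 ex2 uV.
by rewrite ey3 ex2 ((setUidPl _ _).2 s2) ((setUidPl _ _).2 (subset_trans s3 s2)).
Qed.

Lemma pteq_refl w : pteq w w.
Proof. by exists 0; rewrite ptr0 ttr0. Qed.

Lemma pteq_sym w1 w2 : pteq w1 w2 -> pteq w2 w1.
Proof. by move=> [v [e1 e2]]; exists (- v); rewrite e1 e2 ptrK ttrK. Qed.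

Lemma pteq_trans w1 w2 w3 : pteq w1 w2 -> pteq w2 w3 -> pteq w1 w3.
Proof.
by move=> [v [e1 e2]] [a [e3 e4]]; exists (v + a); rewrite e3 e4 e1 e2 ptrD ttrD.
Qed.

Lemma occurs_pteq A w1 w2 : tr_closed A -> pteq w1 w2 -> occurs_at A w1 -> occurs_at A w2.
Proof.
move=> cA [v [e1 e2]] /occursP [p [Ap h1 h2]].
apply/occursP; exists (dptr v p); split; [exact: cA|by rewrite e1; exact: ptrS|].
by rewrite e2 /= h2.
Qed.

End PatternClasses.

Section TilingClasses.
Variables (R : realType) (d : nat) (T : set (tile R d)).
Hypothesis tT : is_tiling T.

Lemma MII_pclass c : MII T c -> pclass c.
Proof.
move=> [p0 [_ hx hy sT] ->]; exists p0; split => //.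
by split => //; [exact: (tiling_bounded tT (sT _ hx))|exact: (tiling_bounded tT (sT _ hy))].
Qed.

Lemma MII_finite c p : MII T c -> c p -> finite_set (dpP p).
Proof. by move=> [p0 [f _ _ _] ->] [v ->]; exact: finite_image. Qed.

Lemma unit_unitary u : is_unit T u -> unitary u.
Proof. by move=> [[p0 _ ->] [p [a ->] /= /ttr_inj]]; exact: tclass_unitary. Qed.

Lemma unit_pclass u : is_unit T u -> pclass u.
Proof. by move=> [/MII_pclass]. Qed.

Lemma unit_absorb u a : is_unit T u -> is_unit T a -> dle a u -> dp_mul u a = u.
Proof.
move=> uu ua; apply: dp_mul_absorb; [exact: (unit_unitary uu)|exact: unit_pclass|
  exact: (unit_unitary ua)|exact: unit_pclass].
Qed.

Lemma unit_composable_dle a b : is_unit T b -> pclass a -> dle a b -> composable T b a.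
Proof.
move=> ub ga hab; have [[p1 [fp1 hx1 hy1 sT1] e1] _] := ub.
have b1 : b p1 by rewrite e1; exact: tclass_refl.
have ex1 : dpx p1 = dpy p1 := unit_unitary ub b1.
have [p [ap sp exp eyp]] := dle_below hab (pclass_tr_closed ga)
  (pclass_tr_connected (unit_pclass ub)) b1.
exists (dpP p1), (dpx p1), (dpx p1), (dpx p1); split => //.
- exists p1, (DP (dpP p1) (dpx p1) (dpx p1)).
  by split; [|exact: tclass_refl| | |rewrite ex1].
- exists p, (DP (dpP p1) (dpx p1) (dpx p1)).
  by split; [|exact: tclass_refl| | |rewrite eyp ex1].
Qed.

End TilingClasses.

Definition ultimately (P : nat -> Prop) := exists n0, forall n, (n0 <= n)%N -> P n.

Lemma ultimatelyI (P Q : nat -> Prop) :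
  ultimately P -> ultimately Q -> ultimately (fun n => P n /\ Q n).
Proof.
move=> [a ha] [b hb]; exists (maxn a b) => n; rewrite geq_max => /andP[h1 h2].
by split; [exact: ha|exact: hb].
Qed.

Lemma ultimately_all_lt (P : nat -> nat -> Prop) k :
  (forall i, (i < k)%N -> ultimately (P i)) ->
  ultimately (fun m => forall i, (i < k)%N -> P i m).
Proof.
elim: k => [|k ih] h; first by exists 0%N.
have [a ha] := ih (fun i lt => h i (ltnW lt)).
have [b hb] := h k (ltnSn _).
exists (maxn a b) => m; rewrite geq_max => /andP[h1 h2] i.
by rewrite ltnS leq_eqVlt => /orP[/eqP ->|lt]; [exact: hb|exact: ha].
Qed.

Lemma finite_uniform_bound (R : realType) (X : Type) (F : set X) (Pr : X -> R -> Prop) :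
  finite_set F -> (forall x r r', r <= r' -> Pr x r -> Pr x r') ->
  (forall x, F x -> exists r, Pr x r) -> exists r, 0 <= r /\ forall x, F x -> Pr x r.
Proof.
elim/Pchoice: X => X in F Pr *; move=> /finite_seqP [s ->] mono.
elim: s => [|x s ih] h; first by exists 0; split.
have [r1 [r10 h1]] : exists r, 0 <= r /\ forall y, [set` s] y -> Pr y r.
  by apply: ih => y ys; apply: h; rewrite /= inE ys orbT.
have [r2 h2] := h x (mem_head _ _).
exists (Num.max r1 r2); split; first by rewrite le_max r10.
move=> y; rewrite /= inE => /orP[/eqP ->|bs].
  by apply: mono h2; rewrite le_max lexx orbT.
by apply: mono (h1 _ bs); rewrite le_max lexx.
Qed.

Section Convergence.
Variables (R : realType) (d : nat).
Local Notation tile := (tile R d).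
Local Notation dpp := (dpp R d).
Local Notation ptil := (ptil R d).
Implicit Types (P Q F : set tile) (p q : dpp) (A B : set dpp) (U : nat -> set dpp)
  (w : ptil).

(* [rad] is a [sup]; when the set is not bounded above, [sup] returns [0]. *)
Lemma rad_covers A (r : R) : 0 <= r -> r < rad A ->
  exists p, A p /\ covers (dpP p) (region (dpx p) r).
Proof.
move=> r0 rr.
have [hs|nhs] := pselect (has_sup
  [set r | 0 <= r /\ exists2 p, A p & covers (dpP p) (region (dpx p) r)]); last first.
  by move: rr; rewrite /rad sup_out // => rr; move: (lt_le_trans rr r0); rewrite ltxx.
have := sup_adherent (eps := rad A - r) _ hs; rewrite subr_gt0 => /(_ rr).
move=> [e [e0 [p Ap cp]]]; rewrite /rad opprB addrC subrK => re.
by exists p; split => //; apply: coversS cp => //; exact: regionS (ltW re).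
Qed.

Lemma placed_covers A w p (r : R) : tr_connected A -> placed A w p -> 0 <= r ->
  r < rad A -> covers (dpP p) (region (ps w) r).
Proof.
move=> rA [Ap _ ex] r0 rr; have [p' [Ap' cp']] := rad_covers r0 rr.
have [v ev] := rA _ _ Ap' Ap; subst p; rewrite -ex /dptr /= region_ttr.
exact: covers_ptr.
Qed.

(* Each tile of [F] has an interior point, which some region around the
   pointed tile reaches; a covering subpattern must then contain the tile. *)
Lemma covering_contains_finite w F : is_tiling (pS w) -> pS w (ps w) ->
  finite_set F -> F `<=` pS w ->
  exists r, 0 <= r /\ forall Q, Q `<=` pS w -> covers Q (region (ps w) r) -> F `<=` Q.
Proof.
move=> tw sw fF Fw.
have [[p0 hp0] _ _ _] := tiling_tile tw sw.
pose reached t (r : R) := exists z, (tpts t)° z /\ region (ps w) r z.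
have mono t r r' : r <= r' -> reached t r -> reached t r'.
  by move=> rr [z [h1 h2]]; exists z; split => //; exact: regionS rr _ h2.
have hex t : F t -> exists r, reached t r.
  move=> Ft; have [z hz] := tiling_interior_neq0 tw (Fw t Ft).
  by exists (enorm (z - p0) + 1), z; split => //; exact: region_reach.
have [r [r0 hr]] := finite_uniform_bound fF mono hex.
exists r; split => // Q Qw cQ t Ft.
have [z [hz rz]] := hr t Ft.
exact: (covers_interior_tile tw Qw cQ (Fw t Ft) hz rz).
Qed.

Definition converges_to U w := [/\ is_tiling (pS w), pS w (ps w),
  (forall n, occurs_at (U n) w), (forall n, tr_connected (U n)) &
  (forall M : R, ultimately (fun n => M <= rad (U n)))].

Lemma converges_contains U w F : converges_to U w -> finite_set F -> F `<=` pS w ->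
  ultimately (fun n => forall q, placed (U n) w q -> F `<=` dpP q).
Proof.
move=> [tw sw oc rU gr] fF Fw.
have [r [r0 hr]] := covering_contains_finite tw sw fF Fw.
have [n0 hn0] := gr (r + 1); exists n0 => n nn0 q pq.
have [_ qw _] := pq; apply: hr qw _; apply: placed_covers (rU n) pq r0 _.
by apply: lt_le_trans (hn0 _ nn0); rewrite ltrDl.
Qed.

Lemma converges_dle U w A p : converges_to U w -> (forall n, unitary (U n)) ->
  unitary A -> placed A w p -> finite_set (dpP p) -> ultimately (fun n => dle A (U n)).
Proof.
move=> cU uU uA pp fp; have [Ap pw ex] := pp.
have [n0 hn0] := converges_contains cU fp pw.
exists n0 => n nn0; have [_ _ oc _ _] := cU.
have /occursP [q pq] := oc n; have [Uq _ exq] := pq.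
exists p, q; split => //; first exact: (hn0 n nn0 q pq).
  by rewrite ex exq.
by rewrite -(uA _ Ap) -(uU _ _ Uq) ex exq.
Qed.

Lemma converges_pteq U w1 w2 : converges_to U w1 -> converges_to U w2 -> pteq w1 w2.
Proof.
move=> cU1 cU2; have [t1 s1 o1 rU _] := cU1; have [t2 s2 o2 _ _] := cU2.
have /occursP [p1 [Ap1 _ ex1]] := o1 0%N; have /occursP [p2 [Ap2 _ ex2]] := o2 0%N.
have [v ev] := rU _ _ _ Ap1 Ap2.
have esv : ps w2 = ttr v (ps w1) by rewrite -ex2 -ex1 ev.
have key n q1 q2 : placed (U n) w1 q1 -> placed (U n) w2 q2 -> dpP q2 = ptr v (dpP q1).
  move=> [h1 _ x1] [h2 _ x2]; have [a ea] := rU _ _ _ h1 h2.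
  have : ttr a (ps w1) = ttr v (ps w1) by rewrite -esv -x2 ea /= x1.
  by move=> /(ttr_injv (tiling_bounded t1 s1)) ea'; rewrite ea ea'.
exists v; split => //; apply/seteqP; split => t.
  move=> ht; have sub : [set t] `<=` pS w2 by move=> s ->.
  have [n0 hn0] := converges_contains cU2 (finite_set1 t) sub.
  have /occursP [q2 pq2] := o2 n0; have /occursP [q1 pq1] := o1 n0.
  have := hn0 n0 (leqnn _) q2 pq2 t erefl; rewrite (key _ _ _ pq1 pq2).
  by apply: ptrS; case: pq1.
move=> [u1 hu1 <-]; have sub : [set u1] `<=` pS w1 by move=> s ->.
have [n0 hn0] := converges_contains cU1 (finite_set1 u1) sub.
have /occursP [q2 pq2] := o2 n0; have /occursP [q1 pq1] := o1 n0.
have h1 := hn0 n0 (leqnn _) q1 pq1 u1 erefl.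
by have [_ sub2 _] := pq2; apply: sub2; rewrite (key _ _ _ pq1 pq2); exact/ptr_ttr.
Qed.

Section InTiling.
Variable T : set tile.
Hypothesis tT : is_tiling T.

(* Any two units occurring at a limit are absorbed by some unit of the
   sequence, which therefore witnesses every relation [v c = v c']. *)
Lemma gcl_eq U w w' c c' v : converges_to U w -> (forall n, is_unit T (U n)) ->
  pteq w w' -> is_unit T v -> occurs_at v w -> dp_mul v c = dp_mul v c' ->
  gcl T w c = gcl T w' c'.
Proof.
move=> cU uU ww' uv ov e.
have absorbs u : is_unit T u -> occurs_at u w -> exists n,
    [/\ dp_mul (U n) u = U n, dp_mul (U n) v = U n & occurs_at (U n) w].
  move=> uu ou.
  have /occursP [p pp] := ou; have /occursP [p' pp'] := ov.
  have [Ap _ _] := pp; have [Ap' _ _] := pp'.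
  have dlU := converges_dle cU (fun n => unit_unitary (uU n)).
  have [n0 hn0] := ultimatelyI (dlU _ _ (unit_unitary uu) pp (MII_finite uu.1 Ap))
     (dlU _ _ (unit_unitary uv) pp' (MII_finite uv.1 Ap')).
  have [h1 h2] := hn0 n0 (leqnn _).
  by exists n0; split; [exact: (unit_absorb tT)|exact: (unit_absorb tT)|case: cU].
apply/seteqP; split => -[w2 c2] [/= hw2 mc2 oc2 [u [uu ou e2]]].
  have [n [a1 a2 o]] := absorbs u uu ou.
  split => //=; first exact: pteq_trans (pteq_sym ww') hw2.
  exists (U n); split => //.
    by apply: occurs_pteq ww' o; exact: pclass_tr_closed (unit_pclass tT (uU n)).
  by rewrite -a2 dp_mulA -e -dp_mulA a2 -a1 dp_mulA e2 -dp_mulA a1.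
have ou' : occurs_at u w.
  by apply: occurs_pteq (pteq_sym ww') ou; exact: pclass_tr_closed (unit_pclass tT uu).
have [n [a1 a2 o]] := absorbs u uu ou'.
split => //=; first exact: pteq_trans ww' hw2.
exists (U n); split => //.
by rewrite -a2 dp_mulA e -dp_mulA a2 -a1 dp_mulA e2 -dp_mulA a1.
Qed.

(* Two patterns glued at a common tile of a limit lie, for large [n], inside
   the pattern of [U n], which is a translate of a pattern of [T]. *)
Lemma composable_in_limit U w A B p p' : converges_to U w -> (forall n, MII T (U n)) ->
  tr_closed A -> tr_closed B -> A p -> B p' -> dpP p `<=` pS w -> dpP p' `<=` pS w ->
  finite_set (dpP p) -> finite_set (dpP p') ->
  dpP p (dpx p) -> dpP p (dpy p) -> dpP p' (dpy p') -> dpy p = dpx p' -> composable T A B.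
Proof.
move=> cU hM cA cB Ap Bp' pw p'w fp fp' hx hy hy' e.
have fU : finite_set (dpP p `|` dpP p') by rewrite finite_setU; split.
have Uw : dpP p `|` dpP p' `<=` pS w by move=> t [/pw|/p'w].
have [n0 hn0] := converges_contains cU fU Uw.
have [_ _ oc _ _] := cU.
have /occursP [q pq] := oc n0; have sub := hn0 n0 (leqnn _) q pq.
have [Uq _ _] := pq.
have [p0 [fp0 _ _ sT] ep0] := hM n0.
move: Uq; rewrite ep0 => -[v ev].
have sub' t : (dpP p `|` dpP p') t -> dpP p0 (ttr (- v) t).
  by move=> /sub; rewrite ev /= ptrP.
exists (dpP p0), (ttr (- v) (dpx p)), (ttr (- v) (dpy p)), (ttr (- v) (dpy p')); split.
- by split => //=; apply: sub'; [left|right].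
- by apply: sub'; left.
- exists (dptr (- v) p), (DP (dpP p0) (ttr (- v) (dpx p)) (ttr (- v) (dpy p))).
  split => //; [exact: cA|exact: tclass_refl|].
  move=> t /= /ptrP h; have := sub' _ (or_introl h).
  by rewrite ttrD opprK subrr ttr0.
- exists (dptr (- v) p'), (DP (dpP p0) (ttr (- v) (dpy p)) (ttr (- v) (dpy p'))).
  split => //; [exact: cB|exact: tclass_refl| |by rewrite /= e].
  move=> t /= /ptrP h; have := sub' _ (or_intror h).
  by rewrite ttrD opprK subrr ttr0.
Qed.

Lemma composable_placed U w A B p p' : converges_to U w -> (forall n, MII T (U n)) ->
  MII T A -> MII T B -> placed A w p -> B p' -> dpP p' `<=` pS w -> dpx p' = dpy p ->
  composable T A B /\ occurs_at (Lu (dp_mul A B)) w.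
Proof.
move=> cU hM mA mB pp Bp' p'w e; have [Ap pw _] := pp.
have gA := MII_pclass tT mA; have gB := MII_pclass tT mB.
have [hx hy] := pclass_pointers gA Ap; have [_ hy'] := pclass_pointers gB Bp'.
split; last by apply/occurs_Lu; eexists; exact: placed_mul pp Bp' e p'w.
exact: (composable_in_limit cU hM (pclass_tr_closed gA) (pclass_tr_closed gB) Ap Bp'
  pw p'w (MII_finite mA Ap) (MII_finite mB Bp') hx hy hy' (esym e)).
Qed.

End InTiling.

Lemma occurs_hball A w : tr_closed A -> (forall p, A p -> finite_set (dpP p)) ->
  is_tiling (pS w) -> pS w (ps w) -> occurs_at A w ->
  exists r : R, forall w', hball w r w' -> occurs_at A w'.
Proof.
move=> cA fA tw sw /occursP [p [Ap pw px]].
have [r [r0 hr]] := covering_contains_finite tw sw (fA _ Ap) pw.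
exists r => w' [r' rr' [P [P' [[PS cP _] [P'S _ _] [v [eP' eps]]]]]].
have FP : dpP p `<=` P by apply: hr PS _; apply: coversS cP => //; exact: regionS (ltW rr').
apply/occursP; exists (dptr v p); split; first exact: cA.
  by apply: subset_trans P'S; rewrite eP'; exact: ptrS.
by rewrite eps /= px.
Qed.

End Convergence.

Section Hull.
Variables (R : realType) (d : nat).
Local Notation pt := ('rV[R]_d).
Local Notation tile := (tile R d).
Local Notation dpp := (dpp R d).
Local Notation ptil := (ptil R d).
Implicit Types (t : tile) (S P Q : set tile) (p q : dpp) (v : pt) (w : ptil)
  (U : nat -> set dpp).

Definition Mr_pattern S x (r : R) : set tile :=
  [set t | S t /\ exists z, (tpts t)° z /\ region x r z].

Lemma is_Mr_pattern S x r : is_tiling S -> is_Mr (PT S x) r (Mr_pattern S x r).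
Proof.
move=> tS; split => /=; first by move=> t [].
  move=> y ry; have [t [St ty]] := tiling_cover tS y.
  exists t => //; split => //.
  have [_ _ _ e] := tiling_tile tS St.
  have : closure (tpts t)° y by rewrite e.
  have hn : nbhs y (region x r) by move: (@open_region _ _ x r); rewrite openE => /(_ y ry).
  by move=> /(_ _ hn) [z [h1 h2]]; exists z.
move=> P' P'S cP' t [St [z [hz rz]]].
exact: (covers_interior_tile tS P'S cP' St hz rz).
Qed.

Lemma Mr_pattern_ptr T S x x0 v P Q (r : R) : is_tiling T -> is_tiling S ->
  Q `<=` S -> covers Q (region x r) -> Q = ptr v P -> P `<=` T -> x = ttr v x0 ->
  Mr_pattern S x r = ptr v (Mr_pattern T x0 r).
Proof.
move=> tT tS QS cQ eQ PT ex; apply/seteqP; split => t.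
  move=> [St [z [hz rz]]].
  have := covers_interior_tile tS QS cQ St hz rz; rewrite eQ => -[t0 Pt0 et]; subst t.
  exists t0 => //; split; first exact: PT.
  move: hz rz; rewrite interior_ttr ex region_ttr => -[z0 hz0 <-] [z1 rz1].
  by move/addIr => e; subst z1; exists z0.
move=> [t0 [Tt0 [z0 [hz0 rz0]]] <-].
have rz : region x r (z0 + v) by rewrite ex region_ttr; exists z0.
have [s Qs zs] := cQ _ rz.
have := Qs; rewrite eQ => -[s0 Ps0 es]; subst s.
have zs0 : tpts s0 z0 by move: zs => /= -[y hy /addIr <-].
have e0 := tiling_interior_unique tT Tt0 (PT _ Ps0) hz0 zs0; subst s0.
split; first exact: QS.
by exists (z0 + v); split; [rewrite interior_ttr; exists z0|].
Qed.

(* It suffices to find, for every [r], a translate of a pattern of [T] inside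
   [w] covering the r-region of the pointed tile: both then have the same
   [M_r]. *)
Lemma hull_of_local_patterns T w : is_tiling T -> is_tiling (pS w) -> pS w (ps w) ->
  (forall r : R, exists Q v P x0, [/\ Q `<=` pS w, covers Q (region (ps w) r),
     Q = ptr v P, P `<=` T & [/\ T x0 & ps w = ttr v x0]]) -> hull T w.
Proof.
move=> tT tS sx h; split => // r.
have [Q [v [P [x0 [QS cQ eQ PT [Tx0 ex]]]]]] := h r.
exists x0; split => //.
exists (Mr_pattern (pS w) (ps w) r), (Mr_pattern T x0 r); split; try exact: is_Mr_pattern.
exists (- v); split; first by rewrite (Mr_pattern_ptr tT tS QS cQ eQ PT ex) ptrK.
by rewrite /= ex ttrK.
Qed.

Lemma converges_hull T U w : is_tiling T -> converges_to U w -> (forall n, MII T (U n)) ->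
  hull T w.
Proof.
move=> tT cU hM; have [tw sw oc rU gr] := cU.
apply: hull_of_local_patterns => // r.
have [n0 hn0] := gr (Num.max r 0 + 1).
have /occursP [q pq] := oc n0; have [Uq qw qx] := pq.
have [p0 [fp0 hx hy sT] e] := hM n0.
move: (Uq); rewrite e => -[v ev].
exists (dpP q), v, (dpP p0), (dpx p0); split => //.
- apply: coversS (placed_covers (rU n0) pq (_ : 0 <= Num.max r 0) _) => //.
  + by apply: regionS; rewrite le_max lexx.
  + by rewrite le_max lexx orbT.
  + by apply: lt_le_trans (hn0 _ (leqnn _)); rewrite ltrDl.
- by rewrite ev.
- by split; [exact: sT|rewrite -qx ev].
Qed.

Lemma tiling_tile_ttr S t v : is_tiling S -> S t ->
  [/\ tpts (ttr v t) !=set0, (exists M : R, forall x, tpts (ttr v t) x -> enorm x <= M),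
   closed (tpts (ttr v t)) & closure (tpts (ttr v t))° = tpts (ttr v t)].
Proof.
move=> tS St; have [h1 h2 h3 h4] := tiling_tile tS St.
have [[y hy] hb] := bounded_shift v (conj h1 h2).
split => //; first by exists y.
- exact: closed_shift.
- by rewrite interior_ttr /= closure_shift h4.
Qed.

End Hull.

Section NestedUnits.
Variables (R : realType) (d : nat) (T : set (tile R d)) (U : nat -> set (dpp R d)).
Local Notation pt := ('rV[R]_d).
Local Notation tile := (tile R d).
Local Notation dpp := (dpp R d).
Hypothesis tT : is_tiling T.
Hypothesis unitU : forall n, is_unit T (U n).
Hypothesis radU : forall M : R, ultimately (fun n => M <= rad (U n)).
Hypothesis nestedU : forall n, ultimately (fun m => dle (U n) (U m)).

Let pclassU n : pclass (U n) := unit_pclass tT (unitU n).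

(* All [U n] contain a representative pointed at one common tile [b0]: push
   a fixed pattern of [U 0] into a larger unit containing both it and [U n]. *)
Lemma nested_units_aligned : exists (b0 : tile) (q : nat -> dpp),
  forall n, U n (q n) /\ dpx (q n) = b0.
Proof.
have [B0 UB0] := pclass_neq0 (pclassU 0%N).
suff /choice [q hq] : forall n, exists p, U n p /\ dpx p = dpx B0 by exists (dpx B0), q.
move=> n.
have [a ha] := nestedU 0%N; have [b hb] := nestedU n.
pose m := maxn a b.
have [Bm UBm] := pclass_neq0 (pclassU m).
have [p [Up _ exp _]] := dle_below (ha m (leq_maxl _ _)) (pclass_tr_closed (pclassU 0%N))
  (pclass_tr_connected (pclassU m)) UBm.
have [s es] := pclass_tr_connected (pclassU 0%N) Up UB0.
have Um' : U m (dptr s Bm) by apply: pclass_tr_closed.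
have [q [Uq _ exq _]] := dle_below (hb m (leq_maxr _ _)) (pclass_tr_closed (pclassU n))
  (pclass_tr_connected (pclassU m)) Um'.
by exists q; split => //; rewrite exq es /= exp.
Qed.

Variables (b0 : tile) (q : nat -> dpp).
Hypothesis qU : forall n, U n (q n).
Hypothesis qx : forall n, dpx (q n) = b0.

Lemma aligned_unique n p : U n p -> dpx p = b0 -> p = q n.
Proof. by move=> Up ep; apply: (pclass_xunique (pclassU n)) Up (qU n) _; rewrite ep qx. Qed.

Lemma aligned_y n : dpy (q n) = b0.
Proof. by rewrite -(unit_unitary (unitU n) (qU n)) qx. Qed.

Lemma aligned_eta n : DP (dpP (q n)) b0 b0 = q n.
Proof. by rewrite -[X in DP _ X _](qx n) -(aligned_y n) dpp_eta. Qed.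

Lemma aligned_nested n : ultimately (fun m => dpP (q n) `<=` dpP (q m)).
Proof.
have [m0 hm0] := nestedU n; exists m0 => m mm0.
have [p [Up s ex _]] := dle_below (hm0 m mm0) (pclass_tr_closed (pclassU n))
  (pclass_tr_connected (pclassU m)) (qU m).
by rewrite -(aligned_unique Up) // ex qx.
Qed.

Lemma aligned_translate n : exists v p0, q n = dptr v p0 /\ Tpat T p0.
Proof.
by have [[p0 tp0 e] _] := unitU n; move: (qU n); rewrite e => -[v ev]; exists v, p0.
Qed.

Definition aligned_union : set tile := [set t | exists n, dpP (q n) t].

Lemma aligned_union_pair t t' : aligned_union t -> aligned_union t' ->
  exists v t0 t0', [/\ T t0, T t0', t = ttr v t0 & t' = ttr v t0'].
Proof.
move=> [a ha] [b hb]; have [ma hma] := aligned_nested a; have [mb hmb] := aligned_nested b.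
pose m := maxn ma mb.
have hta := hma m (leq_maxl _ _) _ ha; have htb := hmb m (leq_maxr _ _) _ hb.
have [v [p0 [e [_ _ _ sT]]]] := aligned_translate m.
move: hta htb; rewrite e => -[t0 h0 <-] [t1 h1 <-].
by exists v, t0, t1; split => //; exact: sT.
Qed.

Lemma aligned_union_ttr t : aligned_union t -> exists v t0, T t0 /\ t = ttr v t0.
Proof.
by move=> St; have [v [t0 [_ [T0 _ -> _]]]] := aligned_union_pair St St; exists v, t0.
Qed.

Lemma aligned_placed n : placed (U n) (PT aligned_union b0) (q n).
Proof. by split => // t ht; exists n. Qed.

Lemma aligned_union_cover y : exists t, aligned_union t /\ tpts t y.
Proof.
have [p0b b0p] : exists z : pt, tpts b0 z.
  have [v [p0 [e [_ hx _ sT]]]] := aligned_translate 0%N.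
  have [[z hz] _ _ _] := tiling_tile tT (sT _ hx).
  by exists (z + v); rewrite -(qx 0%N) e /=; exists z.
pose r := enorm (y - p0b) + 1.
have [n0 hn0] := radU (r + 1).
have r0 : 0 <= r by rewrite /r; have := enorm_ge0 (y - p0b); lra.
have rr : r < rad (U n0) by apply: lt_le_trans (hn0 _ (leqnn _)); rewrite ltrDl.
have [t ht ty] := placed_covers (pclass_tr_connected (pclassU n0)) (aligned_placed n0) r0 rr
  (region_reach y b0p).
by exists t; split => //; exists n0.
Qed.

(* Any two tiles of the union lie in a common translate of a pattern of [T],
   so the tiling axioms transfer from [T]. *)
Lemma aligned_union_tiling : is_tiling aligned_union.
Proof.
split.
- have -> : aligned_union = \bigcup_(n in setT) dpP (q n).
    by apply/seteqP; split => t [n]; exists n.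
  apply: bigcup_countable; first exact: countableP.
  by move=> n _; apply: finite_set_countable; exact: MII_finite (unitU n).1 (qU n).
- by move=> t /aligned_union_ttr [v [t0 [Tt0 ->]]]; exact: (tiling_tile_ttr v tT Tt0).
- have [_ _ [nd hnd] _ _] := tT.
  by exists nd => t /aligned_union_ttr [v [t0 [Tt0 ->]]] /=; exact: hnd.
- split; first exact: aligned_union_cover.
  move=> t t' St St' ne; have [v [t0 [t1 [T0 T1 e0 e1]]]] := aligned_union_pair St St'.
  subst t t'; have ne' : t0 <> t1 by move=> e; apply: ne; rewrite e.
  apply/seteqP; split => // z []; rewrite !interior_ttr => -[z0 h0 <-] [z1 h1 /addIr e].
  subst z1; have : ((tpts t0)° `&` (tpts t1)°) z0 by [].
  by rewrite (tiling_interiorI tT T0 T1 ne').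
- have [_ _ _ _ [nf [f hf]]] := tT; exists nf, f.
  move=> t t' St St' [z [z1 z2]].
  have [v [t0 [t1 [T0 T1 e0 e1]]]] := aligned_union_pair St St'.
  subst t t'; move: z1 z2 => /= [y0 h0 <-] [y1 h1 /addIr e]; subst y1.
  have [i [ilt [v1 [e0 e1]]]] := hf _ _ T0 T1 (ex_intro _ y0 (conj h0 h1)).
  by exists i; split => //; exists (v1 + v); rewrite e0 e1 !ttrD.
Qed.

Lemma aligned_converges : converges_to U (PT aligned_union b0).
Proof.
split => //; first exact: aligned_union_tiling.
- by exists 0%N; have [] := pclass_pointers (pclassU 0%N) (qU 0%N); rewrite qx.
- by move=> n; apply/occursP; exists (q n); exact: aligned_placed.
- by move=> n; exact: pclass_tr_connected.
Qed.

Lemma uprod_aligned k :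
  uprod U k (DP [set t | exists2 i, (i <= k)%N & dpP (q i) t] b0 b0).
Proof.
elim: k => [|k ih] /=.
  have -> : [set t | exists2 i, (i <= 0)%N & dpP (q i) t] = dpP (q 0%N).
    by apply/seteqP; split => t; [case=> i; rewrite leqn0 => /eqP ->|exists 0%N].
  by rewrite aligned_eta.
exists (DP [set t | exists2 i, (i <= k)%N & dpP (q i) t] b0 b0), (q k.+1).
split; [exact: ih|exact: qU|by rewrite qx|rewrite aligned_y].
congr DP; apply/seteqP; split => t.
  case=> i; rewrite leq_eqVlt => /orP[/eqP ->|]; first by right.
  by rewrite ltnS => ik ht; left; exists i.
by case=> [[i ik ht]|ht]; [exists i => //; exact: leqW|exists k.+1].
Qed.

(* Both factors sit inside the pattern of a single later [U m]. *)
Lemma uprod_composable k : composable T (uprod U k) (U k.+1).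
Proof.
have [m0 hm0] := ultimately_all_lt (fun i (_ : (i < k.+2)%N) => aligned_nested i).
have [v [p0 [e [fp0 hx hy sT]]]] := aligned_translate m0.
have ep0 : dpx p0 = dpy p0.
  by apply: (@ttr_inj _ _ v); move: (aligned_y m0) (qx m0); rewrite e /= => -> ->.
have ep : DP (dpP p0) (dpx p0) (dpx p0) = p0 by rewrite {2}ep0 dpp_eta.
have Tq : tclass p0 (q m0) by rewrite e; exists v.
have inc i : (i <= k.+1)%N -> dpP (q i) `<=` dpP (q m0) by exact: hm0.
exists (dpP p0), (dpx p0), (dpx p0), (dpx p0); split => //; rewrite ep.
- exists (DP [set t | exists2 i, (i <= k)%N & dpP (q i) t] b0 b0), (q m0).
  split; [exact: uprod_aligned|exact: Tq| |by rewrite qx|by rewrite aligned_y].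
  by move=> t [i ik]; apply: inc; exact: leqW.
- exists (q k.+1), (q m0).
  by split; [exact: qU|exact: Tq|exact: inc|rewrite !qx|rewrite !aligned_y].
Qed.

End NestedUnits.

Lemma nested_units_limit (R : realType) (d : nat) (T : set (tile R d)) U :
  is_tiling T -> (forall n, is_unit T (U n)) ->
  (forall M : R, ultimately (fun n => M <= rad (U n))) ->
  (forall n, ultimately (fun m => dle (U n) (U m))) ->
  exists w, [/\ hull T w, converges_to U w &
     forall k, composable T (uprod U k) (U k.+1)].
Proof.
move=> tT uU gr nU; have [b0 [q hq]] := nested_units_aligned tT uU nU.
have qU n := (hq n).1; have qx n := (hq n).2.
have cU := aligned_converges tT uU gr nU qU qx.
exists (PT (aligned_union q) b0); split => //.
- by apply: converges_hull tT cU _ => n; exact: (uU n).1.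
- exact: (uprod_composable tT uU nU qU qx).
Qed.

Section Homomorphism.
Variables (R : realType) (d d' : nat).
Variables (T : set (tile R d)) (T' : set (tile R d')).
Variables (N : set (set (dpp R d))) (phih : set (dpp R d) -> set (dpp R d')).
Hypothesis tT : is_tiling T.
Hypothesis tT' : is_tiling T'.
Hypothesis groupoidN : sub_almost_groupoid T N.
Hypothesis approxN : approximating T N.
Hypothesis phih_MII : forall c, N c -> MII T' (phih c).
Hypothesis phih_composable : forall c c', N c -> N c' -> composable T c c' ->
  composable T' (phih c) (phih c').
Hypothesis phih_inv : forall c, N c -> phih (dp_inv c) = dp_inv (phih c).
Hypothesis phih_mul : forall c c', N c -> N c' -> composable T c c' ->
  dle (dp_mul (phih c) (phih c')) (phih (dp_mul c c')).
Hypothesis phih_rad : exists2 t : R, 0 < t & exists K : R, forall u, N u -> is_unit T u ->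
  `|rad (phih u) - t * rad u| <= K.

Lemma N_MII c : N c -> MII T c. Proof. by case: groupoidN => h _ _; exact: h. Qed.
Lemma N_inv c : N c -> N (dp_inv c). Proof. by case: groupoidN => _ h _; exact: h. Qed.
Lemma N_mul c c' : N c -> N c' -> composable T c c' -> N (dp_mul c c').
Proof. by case: groupoidN => _ _ h; exact: h. Qed.
Lemma N_pclass c : N c -> pclass c. Proof. by move=> /N_MII; exact: MII_pclass. Qed.
Lemma phih_pclass c : N c -> pclass (phih c).
Proof. by move=> /phih_MII; exact: MII_pclass. Qed.

(* A unit is its own inverse, hence so is its image; the two pointer tiles of
   the image then differ by a vector [a] with [a + a = 0]. *)
Lemma phih_unit u : N u -> is_unit T u -> is_unit T' (phih u).
Proof.
move=> Nu uu; split; first exact: phih_MII.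
have e : phih u = dp_inv (phih u).
  by rewrite -phih_inv // unitary_inv //; exact: (unit_unitary uu).
have [p0 [e0 [bx _ _ _]]] := phih_pclass Nu.
exists p0; first by rewrite e0; exact: tclass_refl.
have : phih u (dpp_swap p0).
  by rewrite e; apply: dp_inv_swap; rewrite e0; exact: tclass_refl.
rewrite e0 => -[a]; rewrite /dpp_swap /dptr => -[_ ey ex].
have : ttr 0 (dpx p0) = ttr (a + a) (dpx p0) by rewrite ttr0 {1}ex ey ttrD.
by move=> /(ttr_injv bx) /esym /double_eq0 a0; rewrite ey a0 ttr0.
Qed.

(* For units [a ⪯ b] we have [b a = b], so hypothesis (1) exhibits [phih a]
   inside [phih b]. *)
Lemma phih_dle_unit a b : N a -> N b -> is_unit T a -> is_unit T b -> dle a b ->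
  dle (phih a) (phih b).
Proof.
move=> Na Nb ua ub hab; have cba := unit_composable_dle tT ub (unit_pclass tT ua) hab.
have := phih_mul Nb Na cba; rewrite (unit_absorb tT ub ua hab).
move=> [_ [q [[p2 [p3 [b2 a3 e23 ->]]] bq sq ex ey]]].
exists p3, q; split => //; first by move=> t ht; apply: sq; right.
by rewrite -e23 -(unit_unitary (phih_unit Nb ub) b2) -ex.
Qed.

Section ApproximatingSequence.
Variable u : nat -> set (dpp R d).
Hypothesis approx_u : approx_seq T u.
Hypothesis Nu : forall n, N (u n).

Lemma approx_unit n : is_unit T (u n). Proof. by case: approx_u. Qed.

Lemma phih_approx_unit n : is_unit T' (phih (u n)).
Proof. exact: (phih_unit (Nu n) (approx_unit n)). Qed.

Lemma phih_rad_ultimately (M : R) : ultimately (fun n => M <= rad (phih (u n))).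
Proof.
have [t t0 [K hK]] := phih_rad; have [_ _ radu] := approx_u.
have [n0 hn0] := radu ((M + K) / t); exists n0 => n nn0.
have := hK _ (Nu n) (approx_unit n); rewrite ler_norml => /andP[h1 _].
have := hn0 n nn0; rewrite ler_pdivrMr // => h2.
by move: h1 h2; rewrite [rad (u n) * t]mulrC; lra.
Qed.

Variable w : ptil R d.
Hypothesis lim_u : is_lim u w.

Lemma approx_converges : converges_to u w.
Proof.
have [_ _ radu] := approx_u; have [tw sw oc] := lim_u.
by split => // n; exact: (pclass_tr_connected (N_pclass (Nu n))).
Qed.

Lemma approx_hull : hull T w.
Proof. exact: (converges_hull tT approx_converges (fun n => N_MII (Nu n))). Qed.

Lemma phih_nested n : ultimately (fun m => dle (phih (u n)) (phih (u m))).
Proof.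
have [_ _ oc] := lim_u; have /occursP [p pp] := oc n; have [Up _ _] := pp.
have [m0 hm0] := converges_dle approx_converges (fun m => unit_unitary (approx_unit m))
  (unit_unitary (approx_unit n)) pp (MII_finite (N_MII (Nu n)) Up).
by exists m0 => m mm0; apply: phih_dle_unit (hm0 m mm0) => //; exact: approx_unit.
Qed.

Lemma phih_limit :
  approx_seq T' (phih \o u) /\ exists w', hull T' w' /\ is_lim (phih \o u) w'.
Proof.
have [w0 [hw0 [tw0 sw0 ow0 _ _] comp]] :=
  nested_units_limit tT' phih_approx_unit phih_rad_ultimately phih_nested.
split; last by exists w0.
by split; [exact: phih_approx_unit|exact: comp|exact: phih_rad_ultimately].
Qed.

Lemma composable_Lu c : N c -> occurs_at (Lu c) w -> composable T c (dp_inv c).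
Proof.
move=> Nc /occurs_Lu [p pp]; have [cp pw _] := pp.
by case: (composable_placed tT approx_converges (fun n => N_MII (Nu n)) (N_MII Nc)
  (N_MII (N_inv Nc)) pp (dp_inv_swap cp) pw erefl).
Qed.

Lemma N_Lu c : N c -> occurs_at (Lu c) w -> N (Lu c).
Proof. by move=> Nc oL; exact: (N_mul Nc (N_inv Nc) (composable_Lu Nc oL)). Qed.

Lemma Lu_unit c : N c -> occurs_at (Lu c) w -> is_unit T (Lu c).
Proof.
move=> Nc oL; split; first exact: N_MII (N_Lu Nc oL).
have /occurs_Lu [p [cp _ _]] := oL.
exists (DP (dpP p `|` dpP p) (dpx p) (dpx p)) => //.
by exists p, (dpp_swap p); split => //; exact: dp_inv_swap.
Qed.

Lemma XN_lim c : N c -> occurs_at (Lu c) w -> XN T N (w, c).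
Proof.
move=> Nc oL; split => //; exists (dp_inv c); first exact: N_inv.
by split; [exact: approx_hull|rewrite /Ru dp_invK].
Qed.

Variable w' : ptil R d'.
Hypothesis lim_phih_u : is_lim (phih \o u) w'.

Lemma phih_converges : converges_to (phih \o u) w'.
Proof.
have [tw sw oc] := lim_phih_u; split => //; last exact: phih_rad_ultimately.
by move=> n; exact: pclass_tr_connected (phih_pclass (Nu n)).
Qed.

Lemma phih_occurs e : N e -> is_unit T e -> occurs_at e w -> occurs_at (phih e) w'.
Proof.
move=> Ne ue /occursP [p pp]; have [Ap _ _] := pp.
have [n0 hn0] := converges_dle approx_converges (fun m => unit_unitary (approx_unit m))
  (unit_unitary ue) pp (MII_finite (N_MII Ne) Ap).
have h := phih_dle_unit Ne (Nu n0) ue (approx_unit n0) (hn0 n0 (leqnn _)).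
have [_ _ oc'] := lim_phih_u.
exact: (occurs_dle h (pclass_tr_closed (phih_pclass Ne))
  (pclass_tr_connected (phih_pclass (Nu n0))) (oc' n0)).
Qed.

(* [Lu c] is a unit of [N]; its image occurs at [w'] and, by (1), contains
   [Lu (phih c)]. *)
Lemma phih_Lu_occurs c : N c -> occurs_at (Lu c) w -> occurs_at (Lu (phih c)) w'.
Proof.
move=> Nc oL; have NL := N_Lu Nc oL.
have oe := phih_occurs NL (Lu_unit Nc oL) oL.
have h := phih_mul Nc (N_inv Nc) (composable_Lu Nc oL); rewrite phih_inv // in h.
exact: (occurs_dle h (Lu_tr_closed (phih_pclass Nc))
  (pclass_tr_connected (phih_pclass NL)) oe).
Qed.

Lemma phih_seq_absorb m :
  ultimately (fun M => dp_mul (phih (u M)) (phih (u m)) = phih (u M)).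
Proof.
have [M0 hM0] := phih_nested m; exists M0 => M MM0.
exact: (unit_absorb tT' (phih_approx_unit M) (phih_approx_unit m) (hM0 M MM0)).
Qed.

Lemma phih_mul_absorbed c c' : N c -> N c' -> composable T c c' ->
  occurs_at (Lu (phih (dp_mul c c'))) w' ->
  ultimately (fun M => dp_mul (phih (u M)) (dp_mul (phih c) (phih c')) =
                       dp_mul (phih (u M)) (phih (dp_mul c c'))).
Proof.
move=> Nc Nc' ccc oLD; have Ncc := N_mul Nc Nc' ccc.
have /occurs_Lu [pd [Dpd pdw pdx]] := oLD.
have [M0 hM0] := converges_contains phih_converges (MII_finite (phih_MII Ncc) Dpd) pdw.
exists M0 => M MM0; have [_ _ oc _ _] := phih_converges.
have /occursP [pV ppV] := oc M; have [VpV _ pVx] := ppV.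
have gc := phih_pclass Nc; have gc' := phih_pclass Nc'.
have exx : dpx pV = dpx pd by rewrite pVx pdx.
exact: (unit_mul_dle (unit_unitary (phih_approx_unit M)) (phih_pclass (Nu M))
  (phih_pclass Ncc) (tr_closed_mul (pclass_tr_closed gc) (pclass_tr_closed gc'))
  (xunique_mul (pclass_xunique gc) (pclass_xunique gc')) (phih_mul Nc Nc' ccc)
  VpV Dpd exx (hM0 M MM0 pV ppV)).
Qed.

Lemma gcl_phih_mul c c' : N c -> N c' -> composable T c c' ->
  occurs_at (Lu (phih (dp_mul c c'))) w' ->
  gcl T' w' (dp_mul (phih c) (phih c')) = gcl T' w' (phih (dp_mul c c')).
Proof.
move=> Nc Nc' ccc oLD; have [M hM] := phih_mul_absorbed Nc Nc' ccc oLD.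
have [_ _ oc] := lim_phih_u.
exact: (gcl_eq tT' phih_converges phih_approx_unit (pteq_refl _) (phih_approx_unit M)
  (oc M) (hM M (leqnn _))).
Qed.

(* The relation [v c1 = v c2] is absorbed by a unit [u m] of the sequence and
   then transported by (1) to a unit [phih (u M)] of the image sequence. *)
Lemma phih_unit_relation c1 c2 v : N c1 -> N c2 ->
  occurs_at (Lu c1) w -> occurs_at (Lu c2) w -> is_unit T v -> occurs_at v w ->
  dp_mul v c1 = dp_mul v c2 ->
  exists2 V, is_unit T' V /\ occurs_at V w' & dp_mul V (phih c1) = dp_mul V (phih c2).
Proof.
move=> Nc1 Nc2 oL1 oL2 uv ov ev.
have /occursP [pv ppv] := ov; have [vpv _ _] := ppv.
have [m hm] := converges_dle approx_converges (fun n => unit_unitary (approx_unit n))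
  (unit_unitary uv) ppv (MII_finite uv.1 vpv).
have eum := unit_absorb tT (approx_unit m) uv (hm m (leqnn _)).
have [_ _ oc] := lim_u; have /occursP [pu ppu] := oc m; have [upu _ pux] := ppu.
have compose c : N c -> occurs_at (Lu c) w ->
    composable T (u m) c /\ occurs_at (Lu (dp_mul (u m) c)) w.
  move=> Nc /occurs_Lu [pc [cpc pcw pcx]].
  apply: (composable_placed tT approx_converges (fun n => N_MII (Nu n)) (N_MII (Nu m))
    (N_MII Nc) ppu cpc pcw).
  by rewrite -(unit_unitary (approx_unit m) upu) pux pcx.
have [cc1 _] := compose _ Nc1 oL1; have [cc2 oLf] := compose _ Nc2 oL2.
have e12 : dp_mul (u m) c1 = dp_mul (u m) c2 by rewrite -eum !dp_mulA ev.
have oLf' := phih_Lu_occurs (N_mul (Nu m) Nc2 cc2) oLf.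
have oLf1 : occurs_at (Lu (phih (dp_mul (u m) c1))) w' by rewrite e12.
have [M hM] := ultimatelyI (phih_seq_absorb m) (ultimatelyI
  (phih_mul_absorbed (Nu m) Nc1 cc1 oLf1) (phih_mul_absorbed (Nu m) Nc2 cc2 oLf')).
have [a [b1 b2]] := hM M (leqnn _); have [_ _ oc'] := lim_phih_u.
exists (phih (u M)); first by split; [exact: phih_approx_unit|exact: oc'].
by rewrite -a !dp_mulA b1 b2 e12.
Qed.

(* Moving the pointer of [w] along [c] moves the pointer of [w'] along
   [phih c]: the glued images [phih c phih (u1 n)] lie below
   [phih (c u1 n)], whose left unit occurs at [w']. *)
Lemma is_lim_phih_moved c p pc u1 : N c -> placed c w p -> placed (phih c) w' pc ->
  (forall n, N (u1 n)) -> (forall n, occurs_at (u1 n) (PT (pS w) (dpy p))) ->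
  is_lim (phih \o u1) (PT (pS w') (dpy pc)).
Proof.
move=> Nc pp ppc Nu1 ou1; have [tw' sw' _] := lim_phih_u; have [cpc pcw pcx] := ppc.
split => //=; first by apply: pcw; exact: (pclass_pointers (phih_pclass Nc) cpc).2.
move=> n; have /occursP [r [ur rw rx]] := ou1 n; rewrite /= in rw rx.
have [cf oLf] := composable_placed tT approx_converges (fun n => N_MII (Nu n)) (N_MII Nc)
  (N_MII (Nu1 n)) pp ur rw rx.
have Nf := N_mul Nc (Nu1 n) cf.
have /occurs_Lu [pf [fpf pfw pfx]] := phih_Lu_occurs Nf oLf.
have gc := phih_pclass Nc.
have [e [ee sube exe _]] := dle_below (phih_mul Nc (Nu1 n) cf)
  (tr_closed_mul (pclass_tr_closed gc) (pclass_tr_closed (phih_pclass (Nu1 n))))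
  (pclass_tr_connected (phih_pclass Nf)) fpf.
move: ee sube exe => [a [b [ca ub eab ->]]] /= sube exe.
have ea : a = pc by apply: (pclass_xunique gc) ca cpc _; rewrite exe pfx pcx.
subst a; exists b => //; split => /=; last by rewrite -eab.
by move=> t hb; apply: pfw; apply: sube; right.
Qed.

Lemma Ogen_ultimately f c : N c -> occurs_at (Lu (phih c)) w' -> MII T' f ->
  Ogen T' f (gcl T' w' (phih c)) ->
  ultimately (fun m => exists v, [/\ is_unit T' v, dle v (phih (u m)),
    dle (Lu f) (phih (u m)) & dp_mul v (phih c) = dp_mul v f]).
Proof.
move=> Nc oLc Mf [wf [_ oLf ef]].
have : gcl T' w' (phih c) (w', phih c).
  split => //=; [exact: pteq_refl|exact: phih_MII|].
  have [_ _ oc] := lim_phih_u.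
  by exists (phih (u 0%N)); split => //; [exact: phih_approx_unit|exact: oc].
rewrite ef => -[/= wfw' _ _ [v [uv ov ev]]].
have gf := MII_pclass tT' Mf.
have /occursP [pv ppv] := occurs_pteq (pclass_tr_closed (unit_pclass tT' uv)) wfw' ov.
have /occurs_Lu [pf ppf] := occurs_pteq (Lu_tr_closed gf) wfw' oLf.
have [vpv _ _] := ppv; have [fpf pfw pfx] := ppf.
have pLf : placed (Lu f) w' (DP (dpP pf) (dpx pf) (dpx pf)).
  by split => //; apply/(LuP _ (pclass_yunique gf)); exists pf.
have unitary_seq n := unit_unitary (phih_approx_unit n).
have [m0 hm0] := ultimatelyI
  (converges_dle phih_converges unitary_seq (unit_unitary uv) ppv (MII_finite uv.1 vpv))
  (converges_dle phih_converges unitary_seq (Lu_unitary gf) pLf (MII_finite Mf fpf)).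
by exists m0 => m mm0; have [h1 h2] := hm0 m mm0; exists v; split => //; rewrite ev.
Qed.

End ApproximatingSequence.

Lemma XN_approx w c : XN T N (w, c) ->
  exists u, [/\ approx_seq T u, forall n, N (u n) & is_lim u w].
Proof. by move=> [Ow _ _]; have [u [a b e]] := approxN Ow; exists u. Qed.

Definition phi_rel (g : set (ptil R d * set (dpp R d)))
    (g' : set (ptil R d' * set (dpp R d'))) :=
  exists u w c w', [/\ approx_seq T u, forall n, N (u n), is_lim u w, N c &
    occurs_at (Lu c) w] /\ [/\ is_lim (phih \o u) w', g = gclN T N w c &
    g' = gcl T' w' (phih c)].

Lemma phi_rel_functional g g1 g2 : phi_rel g g1 -> phi_rel g g2 -> g1 = g2.
Proof.
move=> [u1 [w1 [c1 [w1' [[a1 N1 l1 Nc1 o1] [l1' eg1 ->]]]]]].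
move=> [u2 [w2 [c2 [w2' [[a2 N2 l2 Nc2 o2] [l2' eg2 ->]]]]]].
have cV1 := phih_converges a1 N1 l1'; have cV2 := phih_converges a2 N2 l2'.
have [_ _ oc1] := l1.
have : gclN T N w1 c1 (w1, c1).
  split; [exact: pteq_refl|exact: (XN_lim a1 N1 l1 Nc1 o1)|].
  by exists (u1 0%N); split => //; exact: (approx_unit a1 0%N).
rewrite -eg1 eg2 => -[/= w21 _ [v [uv ov ev]]].
have cV12 : converges_to (phih \o u1) w2'.
  have [tw2' sw2' _ _ _] := cV2; have [_ _ _ rU1' gr1'] := cV1.
  split => // n; apply: (phih_occurs a2 N2 l2 l2' (N1 n) (approx_unit a1 n)).
  exact: occurs_pteq (pclass_tr_closed (N_pclass (N1 n))) (pteq_sym w21) (oc1 n).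
have w12' := converges_pteq cV1 cV12.
have o1' := occurs_pteq (Lu_tr_closed (N_pclass Nc1)) (pteq_sym w21) o1.
have [V [uV oV] eV] := phih_unit_relation a2 N2 l2 l2' Nc2 Nc1 o2 o1' uv ov ev.
by rewrite (gcl_eq tT' cV2 (phih_approx_unit a2 N2) (pteq_sym w12') uV oV eV).
Qed.

(* Outside the classes [[lim u, c]_N] the value [set0] is a junk value. *)
Definition phi (g : set (ptil R d * set (dpp R d))) : set (ptil R d' * set (dpp R d')) :=
  match pselect (exists g', phi_rel g g') with
  | left h => projT1 (cid h)
  | right _ => set0
  end.

Lemma phiE g g' : phi_rel g g' -> phi g = g'.
Proof.
rewrite /phi => hg; case: pselect => [h|nh]; last by exfalso; apply: nh; exists g'.
exact: phi_rel_functional (projT2 (cid h)) hg.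
Qed.

Lemma phi_lim u w c : approx_seq T u -> (forall n, N (u n)) -> is_lim u w ->
  N c -> occurs_at (Lu c) w ->
  [/\ approx_seq T' (phih \o u), (exists w', hull T' w' /\ is_lim (phih \o u) w') &
      forall w', is_lim (phih \o u) w' ->
        occurs_at (Lu (phih c)) w' /\ phi (gclN T N w c) = gcl T' w' (phih c)].
Proof.
move=> au Nu lu Nc oL; have [apx ex] := phih_limit au Nu lu.
split => // w' lu'; split; first exact: (phih_Lu_occurs au Nu lu lu' Nc oL).
by apply: phiE; exists u, w, c, w'; split; split.
Qed.

Lemma phi_RN g : RN T N g -> Rgpd T' (phi g).
Proof.
move=> [w [c [xw ->]]]; have [_ Nc oL] := xw.
have [u [au Nu lu]] := XN_approx xw.
have [_ [w0 [hw0 lw0]] phi_c] := phi_lim au Nu lu Nc oL.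
have [oL' ->] := phi_c _ lw0.
by exists w0, (phih c); split => //; exact: phih_MII.
Qed.

Lemma phi_mul g h k : gmulN T N g h k -> gmul T' (phi g) (phi h) (phi k).
Proof.
move=> [w [c [c' [w1 [[xw Nc'] [p cp [pw px ->]] xw1 ccc [-> -> ->]]]]]].
have [_ Nc oL] := xw; have [_ _ oL1] := xw1; have pp : placed c w p by [].
have [u [au Nu lu]] := XN_approx xw; have [u1 [au1 Nu1 lu1]] := XN_approx xw1.
have [_ [w0 [hw0 lw0]]] := phih_limit au Nu lu.
have [_ _ phi_c] := phi_lim au Nu lu Nc oL; have [oLc0 ->] := phi_c _ lw0.
have /occurs_Lu [pc ppc] := oLc0; have [cpc _ _] := ppc.
have [_ _ ou1] := lu1.
have lW1 := is_lim_phih_moved au Nu lu lw0 Nc pp ppc Nu1 ou1.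
have [_ _ phi_c'] := phi_lim au1 Nu1 lu1 Nc' oL1; have [oLc'1 ->] := phi_c' _ lW1.
have oLcc : occurs_at (Lu (dp_mul c c')) w.
  have /occurs_Lu [p' [cp' p'w p'x]] := oL1.
  by case: (composable_placed tT (approx_converges au Nu lu) (fun n => N_MII (Nu n))
    (N_MII Nc) (N_MII Nc') pp cp' p'w p'x).
have [_ _ phi_cc] := phi_lim au Nu lu (N_mul Nc Nc' ccc) oLcc.
have [oLD ->] := phi_cc _ lw0.
exists w0, (phih c), (phih c'), (PT (pS w0) (dpy pc)); split => //.
- by split => //; exact: phih_MII.
- by case: ppc => _ pcw pcx; exists pc.
- exact: phih_composable.
- by split => //; rewrite (gcl_phih_mul au Nu lw0 Nc Nc' ccc oLD).
Qed.

(* A basic neighbourhood of [phi [w, c]] is cut out by finitely many classes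
   [f i]; the units witnessing them all lie below one [phih (u M)], and [u M]
   occurs at every pointed tiling close enough to [w]. *)
Lemma phi_continuous V : gopen T' V ->
  XNopen T N [set q | XN T N q /\ V (phi (gclN T N q.1 q.2))].
Proof.
move=> [_ Vop]; split; first by move=> q [].
move=> w c [xw Vg]; have [_ Nc oL] := xw.
have [u [au Nu lu]] := XN_approx xw.
have [_ [w0 [_ lw0]]] := phih_limit au Nu lu.
have [_ _ phi_c] := phi_lim au Nu lu Nc oL.
have [oLc eg] := phi_c _ lw0; rewrite /= eg in Vg.
have [n [f [Mf Of clos]]] := Vop _ Vg.
have [M hM] := ultimately_all_lt
  (fun i ilt => Ogen_ultimately au Nu lw0 Nc oLc (Mf i ilt) (Of i ilt)).
have [tw sw ocu] := lu.
have [r hr] := occurs_hball (pclass_tr_closed (N_pclass (Nu M)))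
  (fun p => MII_finite (N_MII (Nu M))) tw sw (ocu M).
exists r => w'' xw'' near; split => //=.
have [u'' [au'' Nu'' lu'']] := XN_approx xw''; have [_ _ oL''] := xw''.
have [_ [w1 [hw1 lw1]]] := phih_limit au'' Nu'' lu''.
have [_ _ phi_c''] := phi_lim au'' Nu'' lu'' Nc oL''; have [oLc1 ->] := phi_c'' _ lw1.
have oM := phih_occurs au'' Nu'' lu'' lw1 (Nu M) (approx_unit au M) (hr _ near).
apply: clos; first by exists w1, (phih c); split => //; exact: phih_MII.
move=> i ilt; have [v [uv d1 d2 ev]] := hM M (leqnn _) i ilt.
have gM := phih_pclass (Nu M).
exists w1; split => //.
  exact: (occurs_dle d2 (Lu_tr_closed (MII_pclass tT' (Mf i ilt)))
    (pclass_tr_connected gM) oM).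
have ov := occurs_dle d1 (pclass_tr_closed (unit_pclass tT' uv))
  (pclass_tr_connected gM) oM.
exact: (gcl_eq tT' (phih_converges au'' Nu'' lw1) (phih_approx_unit au'' Nu'') (pteq_refl _)
  uv ov ev).
Qed.

End Homomorphism.

Theorem mainTheorem8 (R : realType) (d d' : nat)
  (T : set (tile R d)) (T' : set (tile R d'))
  (N : set (set (dpp R d))) (phih : set (dpp R d) -> set (dpp R d')) :
  is_tiling T -> is_tiling T' ->
  sub_almost_groupoid T N -> approximating T N ->
  (forall c, N c -> MII T' (phih c)) ->
  (forall c c', N c -> N c' -> composable T c c' ->
     composable T' (phih c) (phih c')) ->
  (forall c, N c -> phih (dp_inv c) = dp_inv (phih c)) ->
  (forall c c', N c -> N c' -> composable T c c' ->
     dle (dp_mul (phih c) (phih c')) (phih (dp_mul c c'))) ->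
  (exists2 t : R, 0 < t & exists K : R, forall u, N u -> is_unit T u ->
     `|rad (phih u) - t * rad u| <= K) ->
  exists phi : set (ptil R d * set (dpp R d)) -> set (ptil R d' * set (dpp R d')),
    [/\ (* well defined: phi [lim u, c]_N = [lim phih(u), phih c] *)
        (forall (u : nat -> set (dpp R d)) (w : ptil R d) (c : set (dpp R d)),
           approx_seq T u -> (forall n, N (u n)) -> is_lim u w ->
           N c -> occurs_at (Lu c) w ->
           [/\ approx_seq T' (phih \o u),
               (exists w', hull T' w' /\ is_lim (phih \o u) w') &
               forall w', is_lim (phih \o u) w' ->
                 occurs_at (Lu (phih c)) w' /\
                 phi (gclN T N w c) = gcl T' w' (phih c)]),
        (* groupoid homomorphism R_N -> R' *)
        (forall g, RN T N g -> Rgpd T' (phi g)),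
        (forall g h k, gmulN T N g h k -> gmul T' (phi g) (phi h) (phi k)) &
        (* continuity *)
        (forall V, gopen T' V ->
           XNopen T N [set q | XN T N q /\ V (phi (gclN T N q.1 q.2))])].
Proof.
move=> tT tT' groupoidN approxN phih_MII phih_comp phih_inv phih_mul phih_rad.
exists (phi T T' N phih); split.
- exact: (phi_lim tT tT' groupoidN phih_MII phih_inv phih_mul phih_rad).
- exact: (phi_RN tT tT' groupoidN approxN phih_MII phih_inv phih_mul phih_rad).
- exact: (phi_mul tT tT' groupoidN approxN phih_MII phih_comp phih_inv phih_mul phih_rad).
- exact: (phi_continuous tT tT' groupoidN approxN phih_MII phih_inv phih_mul phih_rad).
Qed.
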